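(* Let $\lambda\in ba(\mathcal A)$ and let $(h_a)_{a\in\mathfrak A}$ be a uniformly bounded net in $\mathcal B(\mathcal A)$. There exists a uniformly bounded sequence $(f_n)$ in $\mathcal S(\mathcal A)$ which is Cauchy in $L^1(\mu)$ for all $\mu\in ba(\mathcal A,\lambda)$ and such that $\operatorname{LIM}_a\mu(h_a1_A)=\lim_n\mu(f_n1_A)$ for all $A\in\mathcal A$ and $\mu\in ba(\mathcal A,\lambda)$. If $(h_a)$ is increasing, $(f_n)$ can be chosen increasing as well.
   Context: $\mathcal A$ algebra of subsets of $\Omega$; $ba(\mathcal A)$ bounded finitely additive real set functions, total variation $|\mu|$. $\mathcal S(\mathcal A)$ the $\mathcal A$-simple functions, $\mathcal B(\mathcal A)$ its closure under the sup norm. $ba(\mathcal A,\lambda)=\{\mu:\mu\ll\lambda\}$, where $\mu\ll\lambda$ means for every $\varepsilon>0$ there is $\delta>0$ with $|\lambda|(A)<\delta\Rightarrow|\mu|(A)<\varepsilon$. $\operatorname{LIM}_a$ denotes a fixed Banach limit over the directed set $\mathfrak A$ (a norm-one positive linear functional on bounded real nets indexed by $\mathfrak A$ extending the limit of convergent nets). A sequence $(f_n)$ of simple functions is Cauchy in $L^1(\mu)$ if $\lim_n\sup_{p,q}|\mu|(|f_{n+p}-f_{n+q}|)=0$. *)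

From Stdlib Require Import Reals List ClassicalEpsilon.
Import ListNotations.
Open Scope R_scope.

Definition setU {Om : Type} (A B : Om -> bool) : Om -> bool := fun w => orb (A w) (B w).
Definition setC {Om : Type} (A : Om -> bool) : Om -> bool := fun w => negb (A w).
Definition setT {Om : Type} : Om -> bool := fun _ => true.
Definition set0 {Om : Type} : Om -> bool := fun _ => false.
Definition disj {Om : Type} (A B : Om -> bool) : Prop := forall w, andb (A w) (B w) = false.

Record is_algebra {Om : Type} (Alg : (Om -> bool) -> Prop) : Prop := {
  alg_full : Alg setT;
  alg_compl : forall A, Alg A -> Alg (setC A);
  alg_union : forall A B, Alg A -> Alg B -> Alg (setU A B)
}.

Definition is_ba {Om : Type} (Alg : (Om -> bool) -> Prop) (mu : (Om -> bool) -> R) : Prop :=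
  (forall A B, Alg A -> Alg B -> disj A B -> mu (setU A B) = mu A + mu B) /\
  (exists M, forall A, Alg A -> Rabs (mu A) <= M).

Definition Rsup (P : R -> Prop) : R := epsilon (inhabits 0) (fun l => is_lub P l).

Definition sumR (l : list R) : R := fold_right Rplus 0 l.

Definition is_partition {Om : Type} (Alg : (Om -> bool) -> Prop)
  (A : Om -> bool) (l : list (Om -> bool)) : Prop :=
  Forall Alg l /\
  (forall i j, (i < length l)%nat -> (j < length l)%nat -> i <> j ->
     disj (nth i l set0) (nth j l set0)) /\
  (forall w, A w = true <-> exists B, In B l /\ B w = true).

Definition tv {Om : Type} (Alg : (Om -> bool) -> Prop) (mu : (Om -> bool) -> R)
  (A : Om -> bool) : R :=
  Rsup (fun s => exists l, is_partition Alg A l /\ s = sumR (map (fun B => Rabs (mu B)) l)).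

Definition abs_cont {Om : Type} (Alg : (Om -> bool) -> Prop) (mu lam : (Om -> bool) -> R) : Prop :=
  forall eps, 0 < eps -> exists delta, 0 < delta /\
    forall A, Alg A -> tv Alg lam A < delta -> tv Alg mu A < eps.

Definition indic {Om : Type} (A : Om -> bool) (w : Om) : R := if A w then 1 else 0.

(* Representations sum_i c_i 1_{A_i} of simple functions. *)
Definition rep_ok {Om : Type} (Alg : (Om -> bool) -> Prop) (r : list (R * (Om -> bool))) : Prop :=
  Forall (fun p => Alg (snd p)) r.
Definition rep_eval {Om : Type} (r : list (R * (Om -> bool))) (w : Om) : R :=
  sumR (map (fun p => fst p * indic (snd p) w) r).
Definition rep_int {Om : Type} (mu : (Om -> bool) -> R) (r : list (R * (Om -> bool))) : R :=
  sumR (map (fun p => fst p * mu (snd p)) r).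

Definition is_simple {Om : Type} (Alg : (Om -> bool) -> Prop) (f : Om -> R) : Prop :=
  exists r, rep_ok Alg r /\ forall w, f w = rep_eval r w.

Definition is_B {Om : Type} (Alg : (Om -> bool) -> Prop) (h : Om -> R) : Prop :=
  forall eps, 0 < eps -> exists s, is_simple Alg s /\ forall w, Rabs (h w - s w) <= eps.

Definition is_integral {Om : Type} (Alg : (Om -> bool) -> Prop) (mu : (Om -> bool) -> R)
  (h : Om -> R) (v : R) : Prop :=
  forall eps, 0 < eps -> exists delta, 0 < delta /\
    forall r, rep_ok Alg r -> (forall w, Rabs (h w - rep_eval r w) <= delta) ->
      Rabs (v - rep_int mu r) <= eps.

Definition integ {Om : Type} (Alg : (Om -> bool) -> Prop) (mu : (Om -> bool) -> R)
  (h : Om -> R) : R := epsilon (inhabits 0) (is_integral Alg mu h).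

Definition L1_cauchy {Om : Type} (Alg : (Om -> bool) -> Prop) (mu : (Om -> bool) -> R)
  (f : nat -> Om -> R) : Prop :=
  forall eps, 0 < eps -> exists N, forall n, (N <= n)%nat -> forall p q,
    integ Alg (tv Alg mu) (fun w => Rabs (f (n + p)%nat w - f (n + q)%nat w)) <= eps.

Record is_directed {D : Type} (le : D -> D -> Prop) : Prop := {
  dir_inhabited : inhabited D;
  dir_refl : forall a, le a a;
  dir_trans : forall a b c, le a b -> le b c -> le a c;
  dir_up : forall a b, exists c, le a c /\ le b c
}.

Definition bounded_net {D : Type} (x : D -> R) : Prop := exists M, forall a, Rabs (x a) <= M.

Definition net_converges {D : Type} (le : D -> D -> Prop) (x : D -> R) (l : R) : Prop :=
  forall eps, 0 < eps -> exists a0, forall a, le a0 a -> Rabs (x a - l) < eps.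

Record is_banach_limit {D : Type} (le : D -> D -> Prop) (LIM : (D -> R) -> R) : Prop := {
  blim_add : forall x y, bounded_net x -> bounded_net y ->
    LIM (fun a => x a + y a) = LIM x + LIM y;
  blim_scal : forall c x, bounded_net x -> LIM (fun a => c * x a) = c * LIM x;
  blim_pos : forall x, bounded_net x -> (forall a, 0 <= x a) -> 0 <= LIM x;
  blim_norm : forall x M, (forall a, Rabs (x a) <= M) -> Rabs (LIM x) <= M;
  blim_lim : forall x l, bounded_net x -> net_converges le x l -> LIM x = l
}.

(* Everything is first done for the positive set function rho = |lambda|:
   - General net.  xi(B) := LIM_a rho(h_a 1_B) is finitely additive with
     |xi| <= K rho (K a bound of the net).  A Radon-Nikodym argument for
     such dominated set functions -- maximise the "energy"
     sum_B xi(B)^2 / rho(B) over finite partitions -- yields step functions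
     g_n, Cauchy in L^1(rho), with g_n rho -> xi in total variation.
   - Increasing net.  Pick a cofinal increasing sequence a_n along which
     rho(h_{a_n}) tends to its supremum, and let f_n be a uniform
     approximation of h_{a_n} shifted down by 3 * 2^-n.
   Both sequences are then transferred to an arbitrary mu << lambda: mu is
   approximated in total variation by densities g rho with g simple, and
   smallness in L^1(rho) becomes smallness in L^1(|mu|) through a Markov
   inequality. *)

From Stdlib Require Import Reals List ClassicalEpsilon Classical FunctionalExtensionality PropExtensionality Lra Lia.
Import ListNotations.
Open Scope R_scope.

Lemma Rabs_le_inv a b : Rabs a <= b -> - b <= a <= b.
Proof. unfold Rabs; destruct (Rcase_abs a); lra. Qed.

Lemma le_eps x c d : 0 <= d -> (forall eps, 0 < eps -> x <= c + eps * d) -> x <= c.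
Proof. intros Hd H. destruct (Rle_dec x c); auto. exfalso.
  assert (H1 := H ((x - c) / (2 * (d + 1)))). assert (0 < (x - c) / (2 * (d + 1))) by (apply Rdiv_lt_0_compat; lra).
  specialize (H1 H0). assert ((x - c) / (2 * (d + 1)) * d < x - c); [|lra].
  apply (Rmult_lt_reg_r (2 * (d + 1))). lra. unfold Rdiv.
  replace ((x - c) * / (2 * (d + 1)) * d * (2 * (d + 1))) with ((x - c) * d) by (field; lra). nra. Qed.

Lemma inv_small eps : 0 < eps -> exists N, forall n, (N <= n)%nat -> / INR (S n) <= eps.
Proof. intros He. destruct (archimed_cor1 eps He) as [N [H1 H2]]. exists N. intros n Hn.
  apply Rle_trans with (/ INR N); [|lra]. apply Rinv_le_contravar. apply lt_0_INR; lia.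
  apply le_INR; lia. Qed.
Lemma sqrt_small a e : 0 <= a -> 0 < e -> exists N, forall n, (N <= n)%nat -> sqrt (a * / INR (S n)) <= e.
Proof. intros Ha He. destruct (inv_small (e ^ 2 / (a + 1))) as [N HN]. apply Rdiv_lt_0_compat; [nra|lra].
  exists N. intros n Hn. rewrite <- (sqrt_pow2 e) by lra. apply sqrt_le_1_alt.
  specialize (HN n Hn). assert (0 < / INR (S n)) by (apply Rinv_0_lt_compat, lt_0_INR; lia).
  apply Rle_trans with ((a + 1) * / INR (S n)). nra.
  apply Rle_trans with ((a + 1) * (e ^ 2 / (a + 1))). apply Rmult_le_compat_l; lra. right; field; lra. Qed.
Lemma half_pow_pos n : 0 < (/ 2) ^ n.
Proof. apply pow_lt; lra. Qed.
Lemma half_pow_le1 n : (/ 2) ^ n <= 1.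
Proof. induction n. simpl; lra. simpl. assert (G := half_pow_pos n). lra. Qed.
Lemma half_pow_le n : (/ 2) ^ n <= / INR (S n).
Proof. assert (H : forall n, INR (S n) <= 2 ^ n).
  { induction n0. simpl; lra. rewrite S_INR. replace (2 ^ S n0) with (2 * 2 ^ n0) by (simpl; ring). assert (1 <= 2 ^ n0) by (apply pow_R1_Rle; lra). lra. }
  rewrite pow_inv. apply Rinv_le_contravar. apply lt_0_INR; lia. apply H. Qed.
Lemma scaled_half_le a e : 0 <= a -> 0 < e -> a * (e / (2 * (a + 1))) <= e / 2.
Proof. intros Ha He. replace (a * (e / (2 * (a + 1)))) with (e / 2 * (a / (a + 1))) by (field; lra).
  rewrite <- (Rmult_1_r (e / 2)) at 2. apply Rmult_le_compat_l; [lra|].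
  apply (Rmult_le_reg_r (a + 1)); [lra|]. unfold Rdiv. rewrite Rmult_assoc, Rinv_l; lra. Qed.

Lemma Rsup_lub (P : R -> Prop) : (exists x, P x) -> (exists M, forall x, P x -> x <= M) -> is_lub P (Rsup P).
Proof. intros Hne Hb. unfold Rsup. apply epsilon_spec.
  assert (Hb' : bound P) by (destruct Hb as [M HM]; exists M; intros x Hx; auto).
  destruct (completeness P Hb' Hne) as [m Hm]. exists m; exact Hm. Qed.

Lemma sumR_app l1 l2 : sumR (l1 ++ l2) = sumR l1 + sumR l2.
Proof. induction l1; simpl; [lra|rewrite IHl1; lra]. Qed.
Lemma sumR_map_plus {X} (f g : X -> R) l :
  sumR (map (fun x => f x + g x) l) = sumR (map f l) + sumR (map g l).
Proof. induction l; simpl; [lra|rewrite IHl; lra]. Qed.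
Lemma sumR_map_scal {X} (c : R) (f : X -> R) l :
  sumR (map (fun x => c * f x) l) = c * sumR (map f l).
Proof. induction l; simpl; [lra|rewrite IHl; lra]. Qed.
Lemma sumR_map_minus {X} (f g : X -> R) l : sumR (map f l) - sumR (map g l) = sumR (map (fun x => f x - g x) l).
Proof. induction l; simpl; [lra|rewrite <- IHl; lra]. Qed.
Lemma sumR_map_ext {X} (f g : X -> R) l :
  (forall x, In x l -> f x = g x) -> sumR (map f l) = sumR (map g l).
Proof. induction l; simpl; intros H; [lra|]. rewrite H, IHl; auto. Qed.
Lemma sumR_map_le {X} (f g : X -> R) l :
  (forall x, In x l -> f x <= g x) -> sumR (map f l) <= sumR (map g l).
Proof. induction l; simpl; intros H; [lra|]. specialize (IHl (fun x h => H x (or_intror h))).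
  specialize (H a (or_introl eq_refl)). lra. Qed.
Lemma sumR_map_abs {X} (f : X -> R) l : Rabs (sumR (map f l)) <= sumR (map (fun x => Rabs (f x)) l).
Proof. induction l; simpl. rewrite Rabs_R0; lra.
  eapply Rle_trans; [apply Rabs_triang|]. lra. Qed.
Lemma sumR_map_nonneg {X} (f : X -> R) l : (forall x, In x l -> 0 <= f x) -> 0 <= sumR (map f l).
Proof. induction l; simpl; intros H; [lra|]. specialize (IHl (fun x h => H x (or_intror h))).
  specialize (H a (or_introl eq_refl)). lra. Qed.
Lemma sumR_map_map {X Y} (f : Y -> R) (g : X -> Y) l : sumR (map f (map g l)) = sumR (map (fun x => f (g x)) l).
Proof. rewrite map_map; reflexivity. Qed.
Lemma sumR_flat_map {X Y} (f : Y -> R) (g : X -> list Y) l :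
  sumR (map f (flat_map g l)) = sumR (map (fun x => sumR (map f (g x))) l).
Proof. induction l; simpl; auto. rewrite map_app, sumR_app, IHl; reflexivity. Qed.
Lemma sumR_swap {X Y} (f : X -> Y -> R) l m :
  sumR (map (fun x => sumR (map (fun y => f x y) m)) l) =
  sumR (map (fun y => sumR (map (fun x => f x y) l)) m).
Proof. induction l; simpl.
  - induction m; simpl; auto. rewrite <- IHm; lra.
  - rewrite IHl. rewrite <- sumR_map_plus. reflexivity. Qed.
Lemma sumR_filter {X} (g : X -> R) p l : sumR (map g (filter p l)) = sumR (map (fun x => if p x then g x else 0) l).
Proof. induction l; simpl; auto. destruct (p a); simpl; rewrite IHl; lra. Qed.
Lemma Forall_filter {X} (P : X -> Prop) p l : Forall P l -> Forall P (filter p l).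
Proof. intros H. apply Forall_forall. intros x Hx. apply filter_In in Hx. rewrite Forall_forall in H. apply H, Hx. Qed.

Definition inter {Om : Type} (A B : Om -> bool) : Om -> bool := fun w => andb (A w) (B w).
Definition sdiff {Om : Type} (A B : Om -> bool) : Om -> bool := inter A (setC B).
Definition bigU {Om : Type} (l : list (Om -> bool)) : Om -> bool := fold_right setU set0 l.
Fixpoint pw_disj {Om : Type} (l : list (Om -> bool)) : Prop :=
  match l with [] => True | B :: l' => Forall (disj B) l' /\ pw_disj l' end.

Ltac seteq := apply functional_extensionality; intro;
  unfold sdiff, inter, setU, setC, setT, set0, indic in *; simpl;
  repeat match goal with |- context [?A ?w] => is_var A; is_var w; destruct (A w) end;
  reflexivity.

Lemma disj_sym {Om} (A B : Om -> bool) : disj A B -> disj B A.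
Proof. intros H w. specialize (H w). destruct (A w), (B w); auto. Qed.
Lemma bigU_in {Om} (l : list (Om -> bool)) w : bigU l w = true <-> exists B, In B l /\ B w = true.
Proof. induction l; simpl. unfold set0; split; [discriminate|intros [B [[] _]]].
  unfold setU. destruct (a w) eqn:E; simpl. split; auto. intros _. exists a; auto.
  rewrite IHl. split. intros [B [H1 H2]]; eauto. intros [B [[->|H1] H2]]; eauto. congruence. Qed.
Lemma bigU_sub {Om} (l : list (Om -> bool)) B w : In B l -> B w = true -> bigU l w = true.
Proof. intros. apply bigU_in; eauto. Qed.
Lemma bigU_app {Om} (l1 l2 : list (Om -> bool)) w : bigU (l1 ++ l2) w = orb (bigU l1 w) (bigU l2 w).
Proof. induction l1; simpl; auto. unfold setU. rewrite IHl1. destruct (a w); auto. Qed.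
Lemma bigU_map_inter {Om} (l : list (Om -> bool)) C w : bigU (map (fun x => inter x C) l) w = andb (bigU l w) (C w).
Proof. induction l; simpl; auto. unfold setU. rewrite IHl. unfold inter. destruct (a w), (bigU l w), (C w); auto. Qed.
Lemma disj_bigU {Om} (B : Om -> bool) l : Forall (disj B) l -> disj B (bigU l).
Proof. induction 1; simpl; intro w. unfold set0; destruct (B w); reflexivity. unfold setU. specialize (H w); specialize (IHForall w).
  destruct (B w), (x w); simpl in *; auto. Qed.
Lemma pw_disj_app {Om} (l1 l2 : list (Om -> bool)) : pw_disj l1 -> pw_disj l2 ->
  (forall x y, In x l1 -> In y l2 -> disj x y) -> pw_disj (l1 ++ l2).
Proof. induction l1; simpl; auto. intros [HF Hp] H2 H. split.
  apply Forall_app; split; auto. apply Forall_forall; intros; apply H; auto.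
  apply IHl1; auto. Qed.
Lemma Forall_disj_inter {Om} (B C : Om -> bool) l : Forall (disj B) l -> Forall (disj (inter B C)) (map (fun x => inter x C) l).
Proof. induction 1; simpl; constructor; auto. intro w. specialize (H w). unfold inter.
  destruct (B w), (x w), (C w); auto. Qed.
Lemma pw_disj_map_inter {Om} (l : list (Om -> bool)) C : pw_disj l -> pw_disj (map (fun x => inter x C) l).
Proof. induction l; simpl; auto. intros [H1 H2]; split; auto. apply Forall_disj_inter; auto. Qed.
Lemma pw_disj_map_inter_l {Om} (B : Om -> bool) m : pw_disj m -> pw_disj (map (fun C => inter B C) m).
Proof. induction m; simpl; auto. intros [H1 H2]. split; auto. apply Forall_map.
  eapply Forall_impl; [|exact H1]. intros x Hx w. specialize (Hx w). unfold inter.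
  destruct (B w), (a w), (x w); auto. Qed.
Lemma pw_disj_filter {Om} (l : list (Om -> bool)) p : pw_disj l -> pw_disj (filter p l).
Proof. induction l; simpl; auto. intros [H1 H2]. destruct (p a); simpl; auto. split; auto.
  apply Forall_forall. intros x Hx. apply filter_In in Hx. rewrite Forall_forall in H1. apply H1, Hx. Qed.
Lemma pw_disj_nth {Om} (l : list (Om -> bool)) : pw_disj l <->
  (forall i j, (i < length l)%nat -> (j < length l)%nat -> i <> j -> disj (nth i l set0) (nth j l set0)).
Proof. induction l as [|B l IH]; simpl. split; auto. intros; lia.
  split.
  - intros [HF Hp] i j Hi Hj Hij. destruct i, j; try lia.
    + rewrite Forall_forall in HF. apply HF. apply nth_In; lia.
    + apply disj_sym. rewrite Forall_forall in HF. apply HF. apply nth_In; lia.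
    + apply IH; auto; lia.
  - intros H. split.
    + apply Forall_forall. intros x Hx. destruct (In_nth l x set0 Hx) as [j [Hj <-]].
      apply (H 0%nat (S j)); lia.
    + apply IH. intros i j Hi Hj Hij. apply (H (S i) (S j)); lia. Qed.
Lemma pw_disj_in_eq {Om} (l : list (Om -> bool)) B C w : pw_disj l -> In B l -> In C l -> B w = true -> C w = true -> B = C.
Proof. intros H2 HB HC Hw HCw. destruct (classic (B = C)); auto. exfalso.
  induction l as [|D l IH]; simpl in *; auto. destruct H2 as [G1 G2].
  rewrite Forall_forall in G1. destruct HB as [<-|HB], HC as [<-|HC]; auto.
  specialize (G1 C HC w). rewrite Hw, HCw in G1; discriminate.
  specialize (G1 B HB w). rewrite Hw, HCw in G1; discriminate. Qed.
Lemma pw_disj_distinct {Om} (l : list (Om -> bool)) B C : pw_disj l -> In B l -> In C l -> B <> C -> disj B C.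
Proof. intros Hp HB HC Hne w. destruct (B w) eqn:E1; destruct (C w) eqn:E2; auto.
  exfalso. apply Hne. apply (pw_disj_in_eq l B C w); auto. Qed.

Section Alg.
Context {Om : Type} (Alg : (Om -> bool) -> Prop) (HAlg : is_algebra Alg).
Lemma alg_set0 : Alg set0.
Proof. replace (@set0 Om) with (setC (@setT Om)) by seteq. apply alg_compl, alg_full; auto. Qed.
Lemma alg_inter A B : Alg A -> Alg B -> Alg (inter A B).
Proof. intros. replace (inter A B) with (setC (setU (setC A) (setC B))) by seteq.
  apply alg_compl; auto; apply alg_union; auto; apply alg_compl; auto. Qed.
Lemma alg_sdiff A B : Alg A -> Alg B -> Alg (sdiff A B).
Proof. intros. apply alg_inter; auto. apply alg_compl; auto. Qed.
Lemma alg_bigU l : Forall Alg l -> Alg (bigU l).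
Proof. induction 1; simpl. apply alg_set0. apply alg_union; auto. Qed.
End Alg.

Definition part {Om} (Alg : (Om -> bool) -> Prop) (A : Om -> bool) (l : list (Om -> bool)) :=
  Forall Alg l /\ pw_disj l /\ (forall w, A w = bigU l w).
Lemma part_iff {Om} Alg (A : Om -> bool) l : is_partition Alg A l <-> part Alg A l.
Proof. unfold is_partition, part. rewrite pw_disj_nth. split.
  - intros [H1 [H2 H3]]. repeat split; auto. intro w. specialize (H3 w).
    destruct (A w) eqn:E; destruct (bigU l w) eqn:E2; auto.
    + assert (bigU l w = true) by (apply bigU_in, H3; auto). congruence.
    + apply H3, bigU_in; auto.
  - intros [H1 [H2 H3]]. repeat split; auto; intros; rewrite H3 in *; apply bigU_in; auto. Qed.
Lemma part_single {Om} (Alg : (Om -> bool) -> Prop) A : Alg A -> part Alg A [A].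
Proof. intros. split. constructor; auto. split. simpl; auto. intro w; simpl. unfold setU, set0.
  destruct (A w); auto. Qed.
Lemma part_T_single {Om} Alg (HAlg : is_algebra Alg) : part Alg (@setT Om) [setT].
Proof. apply part_single, alg_full; auto. Qed.
Lemma part_T_in {Om} Alg (l : list (Om -> bool)) w : part Alg setT l -> exists B, In B l /\ B w = true.
Proof. intros [_ [_ H3]]. apply bigU_in. rewrite <- H3. reflexivity. Qed.
Lemma part_map_inter {Om} Alg (HAlg : is_algebra Alg) (l : list (Om -> bool)) C : Alg C -> part Alg setT l ->
  part Alg C (map (fun x => inter x C) l).
Proof. intros HC [H1 [H2 H3]]. split; [|split].
  - apply Forall_map. eapply Forall_impl; [|exact H1]. intros; apply alg_inter; auto.
  - apply pw_disj_map_inter; auto.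
  - intro w. rewrite bigU_map_inter, <- H3. reflexivity. Qed.

Definition refine {Om} (l m : list (Om -> bool)) := flat_map (fun B => map (fun C => inter B C) m) l.
Lemma In_refine {Om} (l m : list (Om -> bool)) x : In x (refine l m) <-> exists B C, In B l /\ In C m /\ x = inter B C.
Proof. unfold refine. rewrite in_flat_map. split.
  - intros [B [HB Hx]]. apply in_map_iff in Hx. destruct Hx as [C [<- HC]]. eauto.
  - intros [B [C [HB [HC ->]]]]. exists B; split; auto. apply in_map; auto. Qed.
Lemma bigU_refine {Om} (l m : list (Om -> bool)) w : bigU (refine l m) w = andb (bigU l w) (bigU m w).
Proof. unfold refine. induction l as [|B l IH]; simpl; auto. rewrite bigU_app, IH. unfold setU.
  assert (E : bigU (map (fun C => inter B C) m) w = andb (B w) (bigU m w)).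
  { clear IH. induction m; simpl. unfold set0; destruct (B w); auto. unfold setU. rewrite IHm. unfold inter. destruct (B w), (a w); simpl; auto. }
  rewrite E. destruct (B w), (bigU l w), (bigU m w); auto. Qed.
Lemma pw_disj_refine {Om} (l m : list (Om -> bool)) : pw_disj l -> pw_disj m -> pw_disj (refine l m).
Proof. induction l as [|B l IH]; simpl; auto. intros [H1 H2] Hm. apply pw_disj_app. apply pw_disj_map_inter_l; auto.
  apply IH; auto. intros x y Hx Hy. apply in_map_iff in Hx. destruct Hx as [C [<- HC]].
  apply In_refine in Hy. destruct Hy as [B' [C' [HB' [HC' ->]]]]. rewrite Forall_forall in H1.
  intro w. specialize (H1 B' HB' w). unfold inter. destruct (B w), (B' w), (C w), (C' w); auto. Qed.
Lemma part_refine {Om} Alg (HAlg : is_algebra Alg) (l m : list (Om -> bool)) A B :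
  part Alg A l -> part Alg B m -> part Alg (inter A B) (refine l m).
Proof. intros [H1 [H2 H3]] [G1 [G2 G3]]. split; [|split].
  - apply Forall_forall. intros x Hx. apply In_refine in Hx. destruct Hx as [B' [C [HB [HC ->]]]].
    rewrite Forall_forall in H1, G1. apply alg_inter; auto.
  - apply pw_disj_refine; auto.
  - intro w. rewrite bigU_refine, <- H3, <- G3. reflexivity. Qed.
Lemma refine_assoc {Om} (l a b : list (Om -> bool)) : refine (refine l a) b = refine l (refine a b).
Proof. unfold refine. induction l as [|B l IH]; simpl; auto. rewrite flat_map_app, IH. f_equal.
  clear IH. induction a as [|C a IHa]; simpl; auto. rewrite map_app, IHa. f_equal. rewrite map_map.
  apply map_ext. intro D. seteq. Qed.
Lemma refine_cell_inter {Om} (l P : list (Om -> bool)) C x : pw_disj P -> In C P -> In x (refine l P) ->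
  inter x C = x \/ inter x C = set0.
Proof. intros Hp HC Hx. apply In_refine in Hx. destruct Hx as [B [C' [HB [HC' ->]]]].
  destruct (classic (C' = C)) as [<-|Hne].
  - left. seteq.
  - right. assert (Hd := pw_disj_distinct P C' C Hp HC' HC Hne). apply functional_extensionality; intro w.
    specialize (Hd w). unfold inter, set0 in *. destruct (B w), (C' w), (C w); auto. Qed.

Definition step {Om} (l : list (Om -> bool)) (v : (Om -> bool) -> R) (w : Om) : R :=
  sumR (map (fun B => v B * indic B w) l).
Lemma sum_part_point {Om} (l : list (Om -> bool)) (x : (Om -> bool) -> R) w v :
  pw_disj l -> bigU l w = true -> (forall B, In B l -> B w = true -> x B = v) ->
  sumR (map (fun B => x B * indic B w) l) = v.
Proof. induction l as [|B l IH]; simpl; intros Hp HU Hx. unfold set0 in HU; discriminate.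
  destruct Hp as [H1 H2]. unfold setU in HU. destruct (B w) eqn:E.
  - rewrite (Hx B (or_introl eq_refl) E). unfold indic at 1. rewrite E.
    rewrite (sumR_map_ext _ (fun _ => 0)). clear. induction l; simpl; lra.
    intros C HC. rewrite Forall_forall in H1. specialize (H1 C HC w). rewrite E in H1. simpl in H1.
    unfold indic. rewrite H1. lra.
  - simpl in HU. unfold indic at 1. rewrite E. rewrite IH; auto. lra. Qed.
Lemma sum_indic_part {Om} Alg (P : list (Om -> bool)) w : part Alg setT P -> sumR (map (fun C => indic C w) P) = 1.
Proof. intros [H1 [H2 H3]]. rewrite (sumR_map_ext _ (fun C => 1 * indic C w)). apply sum_part_point; auto.
  rewrite <- H3; reflexivity. intros; lra. Qed.
Lemma step_val {Om} Alg (l : list (Om -> bool)) v B w : part Alg setT l -> In B l -> B w = true -> step l v w = v B.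
Proof. intros Hl HB Hw. destruct Hl as [H1 [H2 H3]]. unfold step. apply sum_part_point; auto.
  rewrite <- H3; reflexivity. intros C HC HCw. rewrite (pw_disj_in_eq l C B w); auto. Qed.

Definition rep_scale {Om} (a : R) (r : list (R * (Om -> bool))) := map (fun p => (a * fst p, snd p)) r.
Lemma rep_eval_app {Om} (r1 r2 : list (R * (Om -> bool))) w : rep_eval (r1 ++ r2) w = rep_eval r1 w + rep_eval r2 w.
Proof. unfold rep_eval. rewrite map_app, sumR_app. reflexivity. Qed.
Lemma rep_int_app {Om} mu (r1 r2 : list (R * (Om -> bool))) : rep_int mu (r1 ++ r2) = rep_int mu r1 + rep_int mu r2.
Proof. unfold rep_int. rewrite map_app, sumR_app. reflexivity. Qed.
Lemma rep_eval_scale {Om} a (r : list (R * (Om -> bool))) w : rep_eval (rep_scale a r) w = a * rep_eval r w.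
Proof. unfold rep_eval, rep_scale. rewrite map_map. simpl. rewrite <- sumR_map_scal.
  apply sumR_map_ext; intros; lra. Qed.
Lemma rep_int_scale {Om} mu a (r : list (R * (Om -> bool))) : rep_int mu (rep_scale a r) = a * rep_int mu r.
Proof. unfold rep_int, rep_scale. rewrite map_map. simpl. rewrite <- sumR_map_scal.
  apply sumR_map_ext; intros; lra. Qed.
Lemma rep_ok_app {Om} Alg (r1 r2 : list (R * (Om -> bool))) : rep_ok Alg r1 -> rep_ok Alg r2 -> rep_ok Alg (r1 ++ r2).
Proof. unfold rep_ok; intros; apply Forall_app; auto. Qed.
Lemma rep_ok_scale {Om} Alg a (r : list (R * (Om -> bool))) : rep_ok Alg r -> rep_ok Alg (rep_scale a r).
Proof. unfold rep_ok, rep_scale; intros. apply Forall_map. eapply Forall_impl; [|eauto]. simpl; auto. Qed.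
Lemma rep_int_lin {Om} (m1 m2 : (Om -> bool) -> R) a b r :
  rep_int (fun A => a * m1 A + b * m2 A) r = a * rep_int m1 r + b * rep_int m2 r.
Proof. unfold rep_int. rewrite <- !sumR_map_scal, <- sumR_map_plus. apply sumR_map_ext; intros; lra. Qed.
Definition rep_mul {Om} (r1 r2 : list (R * (Om -> bool))) :=
  flat_map (fun p => map (fun q => (fst p * fst q, inter (snd p) (snd q))) r2) r1.
Lemma rep_eval_mul {Om} (r1 r2 : list (R * (Om -> bool))) w : rep_eval (rep_mul r1 r2) w = rep_eval r1 w * rep_eval r2 w.
Proof. unfold rep_eval, rep_mul. rewrite sumR_flat_map. induction r1 as [|p r1 IH]; simpl. lra.
  rewrite IH. rewrite sumR_map_map. simpl. rewrite Rmult_plus_distr_r. f_equal.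
  rewrite <- sumR_map_scal. apply sumR_map_ext. intros q _. unfold indic, inter.
  destruct (snd p w), (snd q w); simpl; lra. Qed.
Lemma rep_ok_mul {Om} Alg (HAlg : is_algebra Alg) (r1 r2 : list (R * (Om -> bool))) :
  rep_ok Alg r1 -> rep_ok Alg r2 -> rep_ok Alg (rep_mul r1 r2).
Proof. unfold rep_ok, rep_mul. intros H1 H2. apply Forall_forall. intros x Hx. apply in_flat_map in Hx.
  destruct Hx as [p [Hp Hx]]. apply in_map_iff in Hx. destruct Hx as [q [<- Hq]]. simpl.
  rewrite Forall_forall in H1, H2. apply alg_inter; auto. Qed.
Definition rep_norm {Om} (r : list (R * (Om -> bool))) := sumR (map (fun p => Rabs (fst p)) r).
Lemma rep_eval_norm {Om} (r : list (R * (Om -> bool))) w : Rabs (rep_eval r w) <= rep_norm r.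
Proof. unfold rep_eval, rep_norm. eapply Rle_trans. apply sumR_map_abs. apply sumR_map_le.
  intros p _. rewrite Rabs_mult. unfold indic. destruct (snd p w). rewrite Rabs_R1; lra. rewrite Rabs_R0.
  assert (0 <= Rabs (fst p)) by apply Rabs_pos. lra. Qed.
Lemma rep_norm_nonneg {Om} (r : list (R * (Om -> bool))) : 0 <= rep_norm r.
Proof. apply sumR_map_nonneg. intros; apply Rabs_pos. Qed.

Definition rep_res {Om : Type} (r : list (R * (Om -> bool))) (C : Om -> bool) :=
  map (fun p => (fst p, inter (snd p) C)) r.
Lemma rep_res_T {Om : Type} (r : list (R * (Om -> bool))) : rep_res r setT = r.
Proof. induction r as [|[c A] r IH]; simpl; auto. rewrite IH. f_equal. f_equal. seteq. Qed.

Definition pconst {Om} (g : Om -> R) (l : list (Om -> bool)) :=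
  forall B, In B l -> forall w1 w2, B w1 = true -> B w2 = true -> g w1 = g w2.
(* Every simple function is constant on the cells of a finite partition
   (refine successively by [A_i] and its complement). *)
Lemma part_of_rep {Om} Alg (HAlg : is_algebra Alg) (r : list (R * (Om -> bool))) : rep_ok Alg r ->
  exists l, part Alg setT l /\ pconst (rep_eval r) l.
Proof. induction r as [|[c A] r IH]; intros Hr.
  - exists [setT]. split. apply part_T_single; auto. intros B _ w1 w2 _ _. reflexivity.
  - inversion Hr; subst. simpl in H1. destruct (IH H2) as [l [Hl Hc]].
    exists (refine l [A; setC A]). split.
    + replace (@setT Om) with (inter (@setT Om) setT) by seteq. apply part_refine; auto.
      split. constructor; auto. constructor; auto. apply alg_compl; auto.
      split. simpl. split; auto. constructor; auto. intro w; unfold setC; destruct (A w); auto.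
      intro w. simpl. unfold setU, setC, set0, setT. destruct (A w); auto.
    + intros x Hx w1 w2 E1 E2. apply In_refine in Hx. destruct Hx as [B [C [HB [HC ->]]]].
      unfold rep_eval; simpl. fold (rep_eval r w1). fold (rep_eval r w2).
      unfold inter in *. assert (HB1 : B w1 = true) by (destruct (B w1); auto).
      assert (HB2 : B w2 = true) by (destruct (B w2); auto). rewrite (Hc B HB w1 w2); auto.
      destruct HC as [<-|[<-|[]]]; unfold indic, setC in *.
      * rewrite HB1 in E1; rewrite HB2 in E2; simpl in *. rewrite E1, E2; auto.
      * rewrite HB1 in E1; rewrite HB2 in E2; simpl in *. destruct (A w1), (A w2); simpl in *; try discriminate; auto.
Qed.
Definition cell_value {Om} (g : Om -> R) (B : Om -> bool) : R :=
  match excluded_middle_informative (exists w, B w = true) with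
  | left H => g (proj1_sig (constructive_indefinite_description _ H))
  | right _ => 0 end.
Lemma cell_value_spec {Om} (g : Om -> R) B w : B w = true -> (forall w1 w2, B w1 = true -> B w2 = true -> g w1 = g w2) ->
  cell_value g B = g w.
Proof. intros Hw Hc. unfold cell_value. destruct excluded_middle_informative as [H|H].
  - destruct constructive_indefinite_description as [w' Hw']; simpl. apply Hc; auto.
  - exfalso; eauto. Qed.
Definition rep_of_part {Om} (v : (Om -> bool) -> R) (l : list (Om -> bool)) : list (R * (Om -> bool)) :=
  map (fun B => (v B, B)) l.
Lemma rep_of_part_eval {Om} Alg (v : (Om -> bool) -> R) l (g : Om -> R) (F : R -> R) w :
  part Alg setT l -> pconst g l -> (forall B, In B l -> v B = F (cell_value g B)) -> rep_eval (rep_of_part v l) w = F (g w).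
Proof. intros [H1 [H2 H3]] Hc Hv. unfold rep_eval, rep_of_part. rewrite map_map. simpl.
  apply sum_part_point; auto. rewrite <- H3; reflexivity.
  intros B HB Hw. rewrite Hv; auto. f_equal. apply cell_value_spec; auto. intros; apply (Hc B HB); auto. Qed.
Lemma rep_of_part_ok {Om} Alg (v : (Om -> bool) -> R) (l : list (Om -> bool)) A : part Alg A l -> rep_ok Alg (rep_of_part v l).
Proof. intros [H1 _]. unfold rep_ok, rep_of_part. apply Forall_map. auto. Qed.
Lemma step_rep {Om} (l : list (Om -> bool)) v w : step l v w = rep_eval (rep_of_part v l) w.
Proof. unfold step, rep_eval, rep_of_part. rewrite map_map. reflexivity. Qed.
Lemma rep_fun {Om} Alg (HAlg : is_algebra Alg) (r : list (R * (Om -> bool))) (F : R -> R) : rep_ok Alg r ->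
  exists r', rep_ok Alg r' /\ forall w, rep_eval r' w = F (rep_eval r w).
Proof. intros Hr. destruct (part_of_rep Alg HAlg r Hr) as [l [Hl Hc]].
  exists (rep_of_part (fun B => F (cell_value (rep_eval r) B)) l). split. eapply rep_of_part_ok; eauto.
  intro w. eapply rep_of_part_eval; eauto. Qed.
Lemma level_set {Om} Alg (HAlg : is_algebra Alg) (r : list (R * (Om -> bool))) (P : R -> bool) : rep_ok Alg r ->
  exists E, Alg E /\ forall w, E w = P (rep_eval r w).
Proof. intros Hr. destruct (part_of_rep Alg HAlg r Hr) as [l [[H1 [H2 H3]] Hc]].
  exists (bigU (filter (fun B => P (cell_value (rep_eval r) B)) l)). split.
  { apply alg_bigU; auto. apply Forall_filter; auto. }
  intro w. assert (Hw : bigU l w = true) by (rewrite <- H3; reflexivity). apply bigU_in in Hw.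
  destruct Hw as [B [HB Hw]]. rewrite <- (cell_value_spec (rep_eval r) B w Hw (fun w1 w2 => Hc B HB w1 w2)).
  destruct (P (cell_value (rep_eval r) B)) eqn:E.
  - apply bigU_in. exists B; split; auto. apply filter_In; auto.
  - destruct (bigU (filter (fun B0 => P (cell_value (rep_eval r) B0)) l) w) eqn:E2; auto.
    apply bigU_in in E2. destruct E2 as [C [HC HCw]]. apply filter_In in HC. destruct HC as [HC HP].
    assert (B = C) by (apply (pw_disj_in_eq l B C w); auto).
    subst C. rewrite E in HP; discriminate. Qed.

Definition is_add {Om} (Alg : (Om -> bool) -> Prop) (mu : (Om -> bool) -> R) :=
  forall A B, Alg A -> Alg B -> disj A B -> mu (setU A B) = mu A + mu B.

Lemma empty_set0 {Om : Type} (C : Om -> bool) : ~ (exists w, C w = true) -> C = set0.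
Proof. intro H. apply functional_extensionality; intro w. unfold set0.
  destruct (C w) eqn:E; auto. exfalso; eauto. Qed.

Section Add.
Context {Om : Type} (Alg : (Om -> bool) -> Prop) (HAlg : is_algebra Alg)
  (mu : (Om -> bool) -> R) (Hadd : is_add Alg mu).
Lemma mu_set0 : mu set0 = 0.
Proof. assert (H := Hadd set0 set0 (alg_set0 _ HAlg) (alg_set0 _ HAlg) (fun w => eq_refl)).
  replace (setU (@set0 Om) set0) with (@set0 Om) in H by seteq. lra. Qed.
Lemma mu_bigU l : Forall Alg l -> pw_disj l -> mu (bigU l) = sumR (map mu l).
Proof. induction l; simpl; intros HF Hp. apply mu_set0. inversion HF; subst. destruct Hp.
  rewrite Hadd; auto. rewrite IHl; auto. apply alg_bigU; auto. apply disj_bigU; auto. Qed.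
Lemma mu_split A C : Alg A -> Alg C -> mu A = mu (inter A C) + mu (sdiff A C).
Proof. intros. rewrite <- Hadd. f_equal. seteq. apply alg_inter; auto. apply alg_sdiff; auto.
  intro w; unfold sdiff, inter, setC; destruct (A w), (C w); reflexivity. Qed.
Lemma rep_res_split r C A : rep_ok Alg r -> Alg C -> Alg A ->
  rep_int mu (rep_res r C) = rep_int mu (rep_res r (inter C A)) + rep_int mu (rep_res r (sdiff C A)).
Proof. induction r as [|[c B] r IH]; unfold rep_int in *; simpl; intros Hr HC HA. lra.
  inversion Hr; subst. simpl in *. rewrite IH; auto.
  rewrite (mu_split (inter B C) A) by (try apply alg_inter; auto).
  replace (inter (inter B C) A) with (inter B (inter C A)) by seteq.
  replace (sdiff (inter B C) A) with (inter B (sdiff C A)) by seteq. lra. Qed.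

Lemma rep_pos (Hpos : forall A, Alg A -> 0 <= mu A) r : rep_ok Alg r -> forall C k, Alg C ->
  (forall w, C w = true -> k <= rep_eval r w) -> k * mu C <= rep_int mu (rep_res r C).
Proof. induction r as [|[c A] r IH]; intros Hr C k HC Hk.
  - unfold rep_int, rep_eval in *; simpl in *.
    destruct (classic (exists w, C w = true)) as [[w Hw]|Hn].
    + specialize (Hk w Hw). specialize (Hpos C HC). nra.
    + rewrite (empty_set0 C Hn), mu_set0. lra.
  - inversion Hr; subst. simpl in H1.
    assert (E : rep_int mu (rep_res ((c, A) :: r) C) = c * mu (inter A C) + rep_int mu (rep_res r C))
      by reflexivity.
    rewrite E, (rep_res_split r C A); auto.
    assert (H3 := IH H2 (inter C A) (k - c)). assert (H4 := IH H2 (sdiff C A) k).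
    replace (inter A C) with (inter C A) by seteq. rewrite (mu_split C A); auto.
    enough ((k - c) * mu (inter C A) <= rep_int mu (rep_res r (inter C A)) /\
            k * mu (sdiff C A) <= rep_int mu (rep_res r (sdiff C A))) by lra.
    split; [apply H3|apply H4].
    + apply alg_inter; auto.
    + intros w Hw. specialize (Hk w). unfold rep_eval in *; simpl in *. unfold inter in Hw.
      unfold indic in *. destruct (C w), (A w); simpl in *; try discriminate. specialize (Hk eq_refl). lra.
    + apply alg_sdiff; auto.
    + intros w Hw. specialize (Hk w). unfold rep_eval in *; simpl in *. unfold sdiff, inter, setC in Hw.
      unfold indic in *. destruct (C w), (A w); simpl in *; try discriminate. specialize (Hk eq_refl). lra.
Qed.
End Add.

Section Rep.
Context {Om : Type} (Alg : (Om -> bool) -> Prop) (HAlg : is_algebra Alg)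
  (mu : (Om -> bool) -> R) (Hadd : is_add Alg mu).

Lemma rep_mono (Hpos : forall A, Alg A -> 0 <= mu A) r1 r2 : rep_ok Alg r1 -> rep_ok Alg r2 ->
  (forall w, rep_eval r1 w <= rep_eval r2 w) -> rep_int mu r1 <= rep_int mu r2.
Proof. intros H1 H2 H. assert (Hok : rep_ok Alg (r2 ++ rep_scale (-1) r1))
    by (apply rep_ok_app; auto; apply rep_ok_scale; auto).
  assert (E := rep_pos Alg HAlg mu Hadd Hpos (r2 ++ rep_scale (-1) r1) Hok setT 0 (alg_full _ HAlg)).
  rewrite rep_res_T in E. rewrite rep_int_app, rep_int_scale in E.
  enough (0 * mu setT <= rep_int mu r2 + -1 * rep_int mu r1) by lra.
  apply E. intros w _. rewrite rep_eval_app, rep_eval_scale. specialize (H w). lra. Qed.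
Lemma rep_bound_pos (Hpos : forall A, Alg A -> 0 <= mu A) r K : rep_ok Alg r ->
  (forall w, Rabs (rep_eval r w) <= K) -> Rabs (rep_int mu r) <= K * mu setT.
Proof. intros Hr HK. assert (Hc : forall k, rep_int mu [(k, setT)] = k * mu setT)
    by (intro; unfold rep_int; simpl; lra).
  assert (Hok : rep_ok Alg [(K, @setT Om)]) by (constructor; [apply alg_full; auto| constructor]).
  assert (Hok' : rep_ok Alg [(-K, @setT Om)]) by (constructor; [apply alg_full; auto| constructor]).
  apply Rabs_le. split.
  - replace (- (K * mu setT)) with (-K * mu setT) by lra. rewrite <- (Hc (-K)).
    apply rep_mono; auto. intro w. specialize (HK w).
    apply Rabs_le_inv in HK. unfold rep_eval in *; simpl in *. unfold indic, setT in *. lra.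
  - rewrite <- (Hc K). apply rep_mono; auto. intro w. specialize (HK w).
    apply Rabs_le_inv in HK. unfold rep_eval in *; simpl in *. unfold indic, setT in *. lra. Qed.
End Rep.

Definition tvset {Om} (Alg : (Om -> bool) -> Prop) (mu : (Om -> bool) -> R) A :=
  fun s => exists l, is_partition Alg A l /\ s = sumR (map (fun B => Rabs (mu B)) l).

Section TVbound.
Context {Om : Type} (Alg : (Om -> bool) -> Prop) (mu : (Om -> bool) -> R).
Lemma tv_lub_gen A K : Alg A -> (forall l, part Alg A l -> sumR (map (fun B => Rabs (mu B)) l) <= K) ->
  is_lub (tvset Alg mu A) (tv Alg mu A).
Proof. intros HA HK. apply Rsup_lub.
  - exists (sumR (map (fun B => Rabs (mu B)) [A])). exists [A]. split; auto. apply part_iff, part_single; auto.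
  - exists K. intros x [l [Hl ->]]. apply HK, part_iff; auto. Qed.
Lemma tv_le_gen A K : Alg A -> (forall l, part Alg A l -> sumR (map (fun B => Rabs (mu B)) l) <= K) ->
  tv Alg mu A <= K.
Proof. intros HA HK. destruct (tv_lub_gen A K HA HK) as [_ H]. apply H. intros x [l [Hl ->]].
  apply HK, part_iff; auto. Qed.
Lemma tv_ge_gen A K l : Alg A -> (forall l, part Alg A l -> sumR (map (fun B => Rabs (mu B)) l) <= K) ->
  part Alg A l -> sumR (map (fun B => Rabs (mu B)) l) <= tv Alg mu A.
Proof. intros HA HK Hl. destruct (tv_lub_gen A K HA HK) as [H _]. apply H. exists l; split; auto.
  apply part_iff; auto. Qed.
End TVbound.

Section TV.
Context {Om : Type} (Alg : (Om -> bool) -> Prop) (HAlg : is_algebra Alg)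
  (mu : (Om -> bool) -> R) (Hmu : is_ba Alg mu).
Lemma ba_add : is_add Alg mu.
Proof. destruct Hmu; auto. Qed.
Lemma mu_part A l : Alg A -> part Alg A l -> mu A = sumR (map mu l).
Proof. intros HA [H1 [H2 H3]]. replace A with (bigU l). apply (mu_bigU Alg HAlg mu ba_add); auto.
  apply functional_extensionality; intro; auto. Qed.
Definition ba_bound := proj1_sig (constructive_indefinite_description _ (proj2 Hmu)).
Lemma ba_bound_spec : forall A, Alg A -> Rabs (mu A) <= ba_bound.
Proof. unfold ba_bound. destruct constructive_indefinite_description; simpl; auto. Qed.
(* Partition sums are bounded by twice a bound of |mu|: split the cells by
   the sign of [mu] and use additivity on the two unions. *)
Lemma part_bound A l : part Alg A l -> sumR (map (fun B => Rabs (mu B)) l) <= 2 * ba_bound.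
Proof. intros [H1 [H2 H3]].
  set (p := fun B => if Rle_dec 0 (mu B) then true else false).
  assert (E : sumR (map (fun B => Rabs (mu B)) l) = sumR (map mu (filter p l)) - sumR (map mu (filter (fun B => negb (p B)) l))).
  { rewrite !sumR_filter, sumR_map_minus. apply sumR_map_ext. intros x _.
    unfold p. destruct (Rle_dec 0 (mu x)); simpl. rewrite Rabs_right; lra. rewrite Rabs_left; lra. }
  rewrite E. rewrite <- !(mu_bigU Alg HAlg mu ba_add).
  assert (G1 := ba_bound_spec (bigU (filter p l))). assert (G2 := ba_bound_spec (bigU (filter (fun B => negb (p B)) l))).
  apply Rabs_le_inv in G1; [apply Rabs_le_inv in G2|]. lra.
  all: try apply alg_bigU; auto; try apply Forall_filter; auto; try apply pw_disj_filter; auto. Qed.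
Lemma tv_lub A : Alg A -> is_lub (tvset Alg mu A) (tv Alg mu A).
Proof. intros HA. apply (tv_lub_gen _ _ _ (2 * ba_bound)); auto. intros; eapply part_bound; eauto. Qed.
Lemma tv_ge A l : Alg A -> part Alg A l -> sumR (map (fun B => Rabs (mu B)) l) <= tv Alg mu A.
Proof. intros. apply (tv_ge_gen _ _ _ (2 * ba_bound)); auto. intros; eapply part_bound; eauto. Qed.
Lemma tv_le A K : Alg A -> (forall l, part Alg A l -> sumR (map (fun B => Rabs (mu B)) l) <= K) -> tv Alg mu A <= K.
Proof. apply tv_le_gen. Qed.
Lemma tv_bound A : Alg A -> tv Alg mu A <= 2 * ba_bound.
Proof. intros; apply tv_le; auto. intros; eapply part_bound; eauto. Qed.
Lemma tv_abs A : Alg A -> Rabs (mu A) <= tv Alg mu A.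
Proof. intros HA. assert (H := tv_ge A [A] HA (part_single _ _ HA)). simpl in H. lra. Qed.
Lemma tv_nonneg A : Alg A -> 0 <= tv Alg mu A.
Proof. intros HA. assert (H := tv_abs A HA). assert (0 <= Rabs (mu A)) by apply Rabs_pos. lra. Qed.
(* Total variation is additive: refine partitions of A u B by A and by B,
   and conversely concatenate partitions of A and of B. *)
Lemma tv_add : is_add Alg (tv Alg mu).
Proof. intros A B HA HB Hd. assert (HAB : Alg (setU A B)) by (apply alg_union; auto).
  apply Rle_antisym.
  - apply tv_le; auto. intros l [H1 [H2 H3]].
    assert (PA : part Alg A (map (fun x => inter x A) l)).
    { split. apply Forall_map. eapply Forall_impl; [|eauto]. intros; apply alg_inter; auto.
      split. apply pw_disj_map_inter; auto. intro w. rewrite bigU_map_inter, <- H3. unfold setU. destruct (A w), (B w); auto. }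
    assert (PB : part Alg B (map (fun x => inter x B) l)).
    { split. apply Forall_map. eapply Forall_impl; [|eauto]. intros; apply alg_inter; auto.
      split. apply pw_disj_map_inter; auto. intro w. rewrite bigU_map_inter, <- H3. unfold setU. destruct (A w), (B w); auto. }
    assert (G1 := tv_ge A _ HA PA). assert (G2 := tv_ge B _ HB PB). rewrite sumR_map_map in G1, G2.
    eapply Rle_trans; [|apply Rplus_le_compat; [exact G1|exact G2]]. rewrite <- sumR_map_plus.
    apply sumR_map_le. intros C HC. rewrite Forall_forall in H1.
    rewrite (mu_split Alg HAlg mu ba_add C A); auto.
    replace (sdiff C A) with (inter C B). apply Rabs_triang.
    apply functional_extensionality; intro w. specialize (H3 w). specialize (Hd w).
    assert (Hs := bigU_sub l C w HC). unfold sdiff, inter, setC, setU in *.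
    destruct (C w), (A w), (B w); simpl in *; auto. rewrite Hs in H3; auto. 
  - assert (forall sA sB, tvset Alg mu A sA -> tvset Alg mu B sB -> sA + sB <= tv Alg mu (setU A B)).
    { intros sA sB [lA [PA ->]] [lB [PB ->]]. apply part_iff in PA, PB.
      rewrite <- sumR_app, <- map_app. apply tv_ge; auto.
      destruct PA as [A1 [A2 A3]], PB as [B1 [B2 B3]]. split. apply Forall_app; auto. split.
      apply pw_disj_app; auto. intros x y Hx Hy w. specialize (Hd w).
      destruct (x w) eqn:E1; destruct (y w) eqn:E2; auto.
      assert (A w = true) by (rewrite A3; apply (bigU_sub lA x); auto).
      assert (B w = true) by (rewrite B3; apply (bigU_sub lB y); auto). rewrite H, H0 in Hd; auto.
      intro w. rewrite bigU_app, <- A3, <- B3. reflexivity. }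
    destruct (tv_lub A HA) as [_ LA]. destruct (tv_lub B HB) as [_ LB].
    assert (tv Alg mu A <= tv Alg mu (setU A B) - tv Alg mu B); [|lra].
    apply LA. intros sA HsA. assert (sA <= tv Alg mu (setU A B) - tv Alg mu B); [|lra].
    assert (tv Alg mu B <= tv Alg mu (setU A B) - sA); [|lra]. apply LB. intros sB HsB.
    specialize (H sA sB HsA HsB). lra. Qed.
Lemma tv_ba : is_ba Alg (tv Alg mu).
Proof. split. apply tv_add. exists (2 * ba_bound). intros A HA. rewrite Rabs_right. apply tv_bound; auto.
  apply Rle_ge, tv_nonneg; auto. Qed.
Lemma tv_pos_eq (Hpos : forall A, Alg A -> 0 <= mu A) A : Alg A -> tv Alg mu A = mu A.
Proof. intros HA. apply Rle_antisym. apply tv_le; auto. intros l Hl. rewrite (mu_part A l); auto.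
  apply Req_le, sumR_map_ext. intros x Hx. destruct Hl as [H1 _]. rewrite Forall_forall in H1.
  rewrite Rabs_right; auto. apply Rle_ge, Hpos; auto. assert (H := tv_abs A HA). unfold Rabs in H.
  destruct (Rcase_abs (mu A)); lra. Qed.
End TV.

Lemma tv_dom {Om} (Alg : (Om -> bool) -> Prop) (HAlg : is_algebra Alg) (mu nu : (Om -> bool) -> R)
  (Hnu : is_ba Alg nu) (Hdom : forall A, Alg A -> Rabs (mu A) <= nu A) A : Alg A -> tv Alg mu A <= nu A.
Proof. intros HA. apply tv_le_gen; auto. intros l Hl. rewrite (mu_part Alg HAlg nu Hnu A l); auto.
  apply sumR_map_le. intros x Hx. destruct Hl as [H1 _]. rewrite Forall_forall in H1. auto. Qed.
Lemma ba_lin {Om} Alg (m1 m2 : (Om -> bool) -> R) a b : is_ba Alg m1 -> is_ba Alg m2 -> is_ba Alg (fun A => a * m1 A + b * m2 A).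
Proof. intros [A1 [M1 B1]] [A2 [M2 B2]]. split.
  - intros A B HA HB Hd. rewrite A1, A2; auto; lra.
  - exists (Rabs a * M1 + Rabs b * M2). intros A HA. eapply Rle_trans. apply Rabs_triang.
    rewrite !Rabs_mult. apply Rplus_le_compat; apply Rmult_le_compat_l; auto; apply Rabs_pos. Qed.
Lemma ba_scal {Om} Alg (m : (Om -> bool) -> R) a : is_ba Alg m -> is_ba Alg (fun A => a * m A).
Proof. intros [A1 [M B1]]. split. intros A B HA HB Hd. rewrite A1; auto; ring.
  exists (Rabs a * M). intros A HA. rewrite Rabs_mult. apply Rmult_le_compat_l; auto. apply Rabs_pos. Qed.
Lemma pos_mono {Om} Alg (HAlg : is_algebra Alg) (nu : (Om -> bool) -> R) (Hnu : is_ba Alg nu)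
  (Hp : forall A, Alg A -> 0 <= nu A) A : Alg A -> nu A <= nu setT.
Proof. intros HA. rewrite (mu_split Alg HAlg nu (ba_add _ _ Hnu) setT A); auto. 2: apply alg_full; auto.
  replace (inter setT A) with A by seteq. assert (0 <= nu (sdiff setT A)); [|lra].
  apply Hp, alg_sdiff; auto. apply alg_full; auto. Qed.
Lemma tv_triang {Om} Alg (HAlg : is_algebra Alg) (a b : (Om -> bool) -> R) A : is_ba Alg a -> is_ba Alg b -> Alg A ->
  tv Alg (fun X => a X + b X) A <= tv Alg a A + tv Alg b A.
Proof. intros Ha Hb HA. apply (tv_dom Alg HAlg _ (fun X => tv Alg a X + tv Alg b X)); auto.
  assert (E : (fun X => tv Alg a X + tv Alg b X) = (fun X => 1 * tv Alg a X + 1 * tv Alg b X))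
    by (apply functional_extensionality; intro; ring).
  rewrite E. apply ba_lin; apply tv_ba; auto.
  intros X HX. eapply Rle_trans. apply Rabs_triang. apply Rplus_le_compat; apply tv_abs; auto. Qed.
Lemma tv_ext_abs {Om} Alg (a b : (Om -> bool) -> R) A : (forall X, Alg X -> Rabs (a X) = Rabs (b X)) -> tv Alg a A = tv Alg b A.
Proof. intros H. unfold tv. f_equal. apply functional_extensionality; intro s. apply propositional_extensionality.
  split; intros [l [Hl E]]; exists l; split; auto; rewrite E; apply sumR_map_ext; intros x Hx;
  destruct Hl as [H1 _]; rewrite Forall_forall in H1; rewrite H; auto. Qed.
Lemma tv_ext {Om} Alg (a b : (Om -> bool) -> R) A : (forall X, Alg X -> a X = b X) -> tv Alg a A = tv Alg b A.
Proof. intros H. unfold tv. f_equal. apply functional_extensionality; intro s. apply propositional_extensionality.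
  split; intros [l [Hl E]]; exists l; split; auto; rewrite E; apply sumR_map_ext; intros x Hx;
  destruct Hl as [H1 _]; rewrite Forall_forall in H1; rewrite H; auto. Qed.

(* A function of B(A) is a uniform limit of simple
   functions; the elementary integrals along such a sequence are Cauchy since
   |mu(r)| <= sup|r| * |mu|(Omega), and their limit is the integral. *)
Definition unif_approx {Om} (h : Om -> R) (r : nat -> list (R * (Om -> bool))) :=
  forall eps, 0 < eps -> exists N, forall n, (N <= n)%nat -> forall w, Rabs (h w - rep_eval (r n) w) <= eps.
Lemma B_seq {Om} Alg (h : Om -> R) : is_B Alg h -> exists r, (forall n, rep_ok Alg (r n)) /\ unif_approx h r.
Proof. intros Hh.
  assert (H : forall n : nat, exists r, rep_ok Alg r /\ forall w, Rabs (h w - rep_eval r w) <= / INR (S n)).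
  { intro n. assert (Hp : 0 < / INR (S n)) by (apply Rinv_0_lt_compat, lt_0_INR; lia).
    destruct (Hh (/ INR (S n)) Hp) as [s [[r [Hr Hs]] Hhs]].
    exists r; split; auto. intro w; rewrite <- Hs; auto. }
  exists (fun n => proj1_sig (constructive_indefinite_description _ (H n))). split.
  - intro n. destruct (constructive_indefinite_description _ (H n)) as [r [Hr Hr2]]; simpl; auto.
  - intros eps He. destruct (inv_small eps He) as [N HN]. exists N. intros n Hn w.
    destruct (constructive_indefinite_description _ (H n)) as [r [Hr0 Hr]]; simpl. eapply Rle_trans; [apply Hr|auto]. Qed.

Section Integ.
Context {Om : Type} (Alg : (Om -> bool) -> Prop) (HAlg : is_algebra Alg)
  (mu : (Om -> bool) -> R) (Hmu : is_ba Alg mu).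
Definition total_var := tv Alg mu setT.
Lemma total_var_nonneg : 0 <= total_var.
Proof. apply tv_nonneg; auto. apply alg_full; auto. Qed.
(* Jordan decomposition mu = (|mu| + mu)/2 - (|mu| - mu)/2 gives the bound. *)
Lemma rep_bound r K : rep_ok Alg r -> (forall w, Rabs (rep_eval r w) <= K) -> Rabs (rep_int mu r) <= K * total_var.
Proof. intros Hr HK.
  set (mp := fun A => / 2 * tv Alg mu A + / 2 * mu A).
  set (mn := fun A => / 2 * tv Alg mu A + - / 2 * mu A).
  assert (Hadd := ba_add Alg mu Hmu). assert (Htv := tv_add Alg HAlg mu Hmu).
  assert (Ap : is_add Alg mp) by (intros A B HA HB Hd; unfold mp; rewrite Hadd, Htv; auto; lra).
  assert (An : is_add Alg mn) by (intros A B HA HB Hd; unfold mn; rewrite Hadd, Htv; auto; lra).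
  assert (Pp : forall A, Alg A -> 0 <= mp A).
  { intros A HA; unfold mp. assert (G := tv_abs Alg HAlg mu Hmu A HA). apply Rabs_le_inv in G. lra. }
  assert (Pn : forall A, Alg A -> 0 <= mn A).
  { intros A HA; unfold mn. assert (G := tv_abs Alg HAlg mu Hmu A HA). apply Rabs_le_inv in G. lra. }
  assert (E : mu = fun A => 1 * mp A + -1 * mn A).
  { apply functional_extensionality; intro A; unfold mp, mn; lra. }
  rewrite E, rep_int_lin.
  assert (G1 := rep_bound_pos Alg HAlg mp Ap Pp r K Hr HK).
  assert (G2 := rep_bound_pos Alg HAlg mn An Pn r K Hr HK).
  apply Rabs_le_inv in G1, G2. apply Rabs_le. unfold mp, mn in *. unfold total_var. lra. Qed.
Lemma rep_diff r1 r2 d : rep_ok Alg r1 -> rep_ok Alg r2 -> (forall w, Rabs (rep_eval r1 w - rep_eval r2 w) <= d) ->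
  Rabs (rep_int mu r1 - rep_int mu r2) <= d * total_var.
Proof. intros H1 H2 H. replace (rep_int mu r1 - rep_int mu r2) with (rep_int mu (r1 ++ rep_scale (-1) r2)).
  apply rep_bound. apply rep_ok_app; auto; apply rep_ok_scale; auto.
  intro w. rewrite rep_eval_app, rep_eval_scale. replace (rep_eval r1 w + -1 * rep_eval r2 w) with (rep_eval r1 w - rep_eval r2 w) by lra. auto.
  rewrite rep_int_app, rep_int_scale. lra. Qed.
Lemma unif_approx_cauchy h r : (forall n, rep_ok Alg (r n)) -> unif_approx h r -> Cauchy_crit (fun n => rep_int mu (r n)).
Proof. intros Hr Hu eps He. assert (T0 := total_var_nonneg).
  assert (Hp : 0 < eps / (2 * (total_var + 1))) by (apply Rdiv_lt_0_compat; lra).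
  destruct (Hu _ Hp) as [N HN].
  exists N. intros n m Hn Hm. unfold Rdist.
  assert (G := rep_diff (r n) (r m) (2 * (eps / (2 * (total_var + 1)))) (Hr n) (Hr m)).
  eapply Rle_lt_trans. apply G. intro w. assert (G1 := HN n Hn w). assert (G2 := HN m Hm w).
  apply Rabs_le_inv in G1, G2. apply Rabs_le. lra.
  replace (2 * (eps / (2 * (total_var + 1))) * total_var) with (eps * (total_var / (total_var + 1))) by (field; lra).
  rewrite <- (Rmult_1_r eps) at 2. apply Rmult_lt_compat_l; auto.
  apply (Rmult_lt_reg_r (total_var + 1)); [lra|]. unfold Rdiv. rewrite Rmult_assoc, Rinv_l; lra. Qed.
Lemma unif_approx_integral h r v : (forall n, rep_ok Alg (r n)) -> unif_approx h r -> Un_cv (fun n => rep_int mu (r n)) v ->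
  is_integral Alg mu h v.
Proof. intros Hr Hu Hv eps He. assert (T0 := total_var_nonneg).
  set (e := eps / (2 * total_var + 2)). assert (He' : 0 < e) by (apply Rdiv_lt_0_compat; lra).
  exists e. split; auto. intros r' Hr' Hh.
  destruct (Hu e He') as [N1 H1]. destruct (Hv e He') as [N2 H2].
  set (n := (N1 + N2)%nat). specialize (H2 n ltac:(unfold n; lia)). specialize (H1 n ltac:(unfold n; lia)).
  unfold Rdist in H2. assert (G := rep_diff (r n) r' (2 * e) (Hr n) Hr').
  assert (G' : Rabs (rep_int mu (r n) - rep_int mu r') <= 2 * e * total_var).
  { apply G. intro w. specialize (H1 w). specialize (Hh w). apply Rabs_le_inv in H1, Hh. apply Rabs_le. lra. }
  apply Rabs_le_inv in G'. apply Rabs_def2 in H2. apply Rabs_le.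
  assert (e * (2 * total_var + 2) = eps) by (unfold e; field; lra). nra. Qed.
Lemma integral_unique h v1 v2 : is_B Alg h -> is_integral Alg mu h v1 -> is_integral Alg mu h v2 -> v1 = v2.
Proof. intros Hh H1 H2. apply cond_eq. intros eps He.
  destruct (H1 (eps / 3)) as [d1 [Hd1 G1]]. lra. destruct (H2 (eps / 3)) as [d2 [Hd2 G2]]. lra.
  destruct (Hh (Rmin d1 d2)) as [s [[r [Hr Hs]] Hhs]]. apply Rmin_pos; auto.
  assert (A1 := G1 r Hr). assert (A2 := G2 r Hr).
  assert (B1 : forall w, Rabs (h w - rep_eval r w) <= d1).
  { intro w. rewrite <- Hs. eapply Rle_trans; [apply Hhs|apply Rmin_l]. }
  assert (B2 : forall w, Rabs (h w - rep_eval r w) <= d2).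
  { intro w. rewrite <- Hs. eapply Rle_trans; [apply Hhs|apply Rmin_r]. }
  specialize (A1 B1). specialize (A2 B2). apply Rabs_le_inv in A1, A2. apply Rabs_def1; lra. Qed.
Lemma integ_spec h : is_B Alg h -> is_integral Alg mu h (integ Alg mu h).
Proof. intros Hh. unfold integ. apply epsilon_spec.
  destruct (B_seq Alg h Hh) as [r [Hr Hu]]. destruct (R_complete _ (unif_approx_cauchy h r Hr Hu)) as [v Hv].
  exists v. apply (unif_approx_integral h r v); auto. Qed.
Lemma integ_eq h v : is_B Alg h -> is_integral Alg mu h v -> integ Alg mu h = v.
Proof. intros. apply (integral_unique h); auto. apply integ_spec; auto. Qed.
Lemma integ_lim h r : is_B Alg h -> (forall n, rep_ok Alg (r n)) -> unif_approx h r ->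
  Un_cv (fun n => rep_int mu (r n)) (integ Alg mu h).
Proof. intros Hh Hr Hu. destruct (R_complete _ (unif_approx_cauchy h r Hr Hu)) as [v Hv].
  rewrite (integ_eq h v); auto. apply (unif_approx_integral h r v); auto. Qed.
Lemma integ_rep h r : rep_ok Alg r -> (forall w, h w = rep_eval r w) -> integ Alg mu h = rep_int mu r.
Proof. intros Hr Hh. assert (HB : is_B Alg h).
  { intros eps He. exists h. split. exists r; auto. intro w. rewrite Rminus_diag, Rabs_R0; lra. }
  assert (Hu : unif_approx h (fun _ => r)). { intros eps He. exists O. intros n _ w. rewrite Hh, Rminus_diag, Rabs_R0; lra. }
  assert (G := integ_lim h (fun _ => r) HB (fun _ => Hr) Hu).
  apply (UL_sequence (fun _ => rep_int mu r)); auto.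
  intros eps He. exists O. intros. unfold Rdist. rewrite Rminus_diag, Rabs_R0; lra. Qed.
End Integ.

Lemma B_approx {Om} Alg (h : Om -> R) d : is_B Alg h -> 0 < d -> exists r, rep_ok Alg r /\ forall w, Rabs (h w - rep_eval r w) <= d.
Proof. intros Hh Hd. destruct (Hh d Hd) as [s [[r [Hr Hs]] Hhs]]. exists r; split; auto. intro w; rewrite <- Hs; auto. Qed.
Lemma B_rep {Om} Alg (h : Om -> R) r : rep_ok Alg r -> (forall w, h w = rep_eval r w) -> is_B Alg h.
Proof. intros Hr Hh eps He. exists h. split. exists r; auto. intro w. rewrite Rminus_diag, Rabs_R0; lra. Qed.
Lemma B_lin {Om} Alg (h1 h2 : Om -> R) a b : is_B Alg h1 -> is_B Alg h2 -> is_B Alg (fun w => a * h1 w + b * h2 w).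
Proof. intros H1 H2 eps He. set (d := eps / (Rabs a + Rabs b + 1)).
  assert (Hd : 0 < d) by (unfold d; apply Rdiv_lt_0_compat; [lra|]; assert (0 <= Rabs a) by apply Rabs_pos; assert (0 <= Rabs b) by apply Rabs_pos; lra).
  destruct (B_approx Alg h1 d H1 Hd) as [r1 [Hr1 G1]]. destruct (B_approx Alg h2 d H2 Hd) as [r2 [Hr2 G2]].
  exists (rep_eval (rep_scale a r1 ++ rep_scale b r2)). split.
  exists (rep_scale a r1 ++ rep_scale b r2). split; auto. apply rep_ok_app; apply rep_ok_scale; auto.
  intro w. rewrite rep_eval_app, !rep_eval_scale.
  replace (a * h1 w + b * h2 w - (a * rep_eval r1 w + b * rep_eval r2 w)) with (a * (h1 w - rep_eval r1 w) + b * (h2 w - rep_eval r2 w)) by ring.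
  eapply Rle_trans. apply Rabs_triang. rewrite !Rabs_mult.
  assert (0 <= Rabs a) by apply Rabs_pos; assert (0 <= Rabs b) by apply Rabs_pos.
  specialize (G1 w); specialize (G2 w).
  apply Rle_trans with (Rabs a * d + Rabs b * d). apply Rplus_le_compat; apply Rmult_le_compat_l; auto.
  assert (d * (Rabs a + Rabs b + 1) = eps) by (unfold d; field; lra). nra. Qed.
Lemma B_mul_rep {Om} Alg (HAlg : is_algebra Alg) (h : Om -> R) r : is_B Alg h -> rep_ok Alg r -> is_B Alg (fun w => h w * rep_eval r w).
Proof. intros H Hr eps He. set (K := rep_norm r). assert (0 <= K) by apply rep_norm_nonneg.
  set (d := eps / (K + 1)). assert (Hd : 0 < d) by (apply Rdiv_lt_0_compat; lra).
  destruct (B_approx Alg h d H Hd) as [r1 [Hr1 G1]].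
  exists (rep_eval (rep_mul r1 r)). split. exists (rep_mul r1 r). split; auto. apply rep_ok_mul; auto.
  intro w. rewrite rep_eval_mul. rewrite <- Rmult_minus_distr_r, Rabs_mult.
  assert (G2 := rep_eval_norm r w). specialize (G1 w). fold K in G2.
  apply Rle_trans with (d * K). apply Rmult_le_compat; auto; apply Rabs_pos.
  assert (d * (K + 1) = eps) by (unfold d; field; lra). nra. Qed.
Lemma B_mul_indic {Om} Alg (HAlg : is_algebra Alg) (k : Om -> R) A : is_B Alg k -> Alg A -> is_B Alg (fun w => k w * indic A w).
Proof. intros Hk HA. replace (fun w => k w * indic A w) with (fun w => k w * rep_eval [(1, A)] w).
  apply B_mul_rep; auto. constructor; auto. apply functional_extensionality; intro w. unfold rep_eval; simpl. ring. Qed.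

Section Integ2.
Context {Om : Type} (Alg : (Om -> bool) -> Prop) (HAlg : is_algebra Alg)
  (mu : (Om -> bool) -> R) (Hmu : is_ba Alg mu).
Lemma integ_bound h K : is_B Alg h -> (forall w, Rabs (h w) <= K) -> Rabs (integ Alg mu h) <= K * total_var Alg mu.
Proof. intros Hh HK. assert (T0 := total_var_nonneg Alg HAlg mu Hmu).
  assert (forall eps, 0 < eps -> Rabs (integ Alg mu h) <= K * total_var Alg mu + eps * (1 + total_var Alg mu)).
  { intros eps He. destruct (integ_spec Alg HAlg mu Hmu h Hh eps He) as [d [Hd G]].
    destruct (B_approx Alg h (Rmin d eps) Hh) as [r [Hr Hhr]]. apply Rmin_pos; auto.
    assert (G1 := G r Hr (fun w => Rle_trans _ _ _ (Hhr w) (Rmin_l _ _))).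
    assert (G2 := rep_bound Alg HAlg mu Hmu r (K + eps) Hr).
    assert (Rabs (rep_int mu r) <= (K + eps) * total_var Alg mu).
    { apply G2. intro w. specialize (Hhr w). assert (Rmin d eps <= eps) by apply Rmin_r.
      specialize (HK w). apply Rabs_le_inv in Hhr, HK. apply Rabs_le. lra. }
    apply Rabs_le_inv in G1, H. apply Rabs_le. nra. }
  apply (le_eps _ _ (1 + total_var Alg mu)); auto; lra. Qed.
Lemma integ_lin h1 h2 a b : is_B Alg h1 -> is_B Alg h2 ->
  integ Alg mu (fun w => a * h1 w + b * h2 w) = a * integ Alg mu h1 + b * integ Alg mu h2.
Proof. intros H1 H2. assert (H12 := B_lin Alg h1 h2 a b H1 H2).
  apply cond_eq. intros eps He.
  set (e := eps / (2 * (Rabs a + Rabs b + 1))). assert (0 <= Rabs a) by apply Rabs_pos; assert (0 <= Rabs b) by apply Rabs_pos.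
  assert (Hep : 0 < e) by (apply Rdiv_lt_0_compat; lra).
  destruct (integ_spec Alg HAlg mu Hmu _ H12 e Hep) as [d [Hd G]].
  destruct (integ_spec Alg HAlg mu Hmu _ H1 e Hep) as [d1 [Hd1 G1]].
  destruct (integ_spec Alg HAlg mu Hmu _ H2 e Hep) as [d2 [Hd2 G2]].
  set (d' := Rmin (Rmin d1 d2) (d / (Rabs a + Rabs b + 1))).
  assert (Hd' : 0 < d') by (apply Rmin_pos; [apply Rmin_pos|apply Rdiv_lt_0_compat]; auto; lra).
  destruct (B_approx Alg h1 d' H1 Hd') as [r1 [Hr1 A1]]. destruct (B_approx Alg h2 d' H2 Hd') as [r2 [Hr2 A2]].
  assert (d' <= d1) by (unfold d'; eapply Rle_trans; [apply Rmin_l|apply Rmin_l]).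
  assert (d' <= d2) by (unfold d'; eapply Rle_trans; [apply Rmin_l|apply Rmin_r]).
  assert (d' <= d / (Rabs a + Rabs b + 1)) by (unfold d'; apply Rmin_r).
  assert (E1 := G1 r1 Hr1 (fun w => Rle_trans _ _ _ (A1 w) H3)).
  assert (E2 := G2 r2 Hr2 (fun w => Rle_trans _ _ _ (A2 w) H4)).
  assert (E := G (rep_scale a r1 ++ rep_scale b r2)).
  rewrite rep_int_app, !rep_int_scale in E.
  assert (Hx : Rabs (integ Alg mu (fun w => a * h1 w + b * h2 w) - (a * rep_int mu r1 + b * rep_int mu r2)) <= e).
  { apply E. apply rep_ok_app; apply rep_ok_scale; auto. intro w. rewrite rep_eval_app, !rep_eval_scale.
    replace (a * h1 w + b * h2 w - (a * rep_eval r1 w + b * rep_eval r2 w)) with (a * (h1 w - rep_eval r1 w) + b * (h2 w - rep_eval r2 w)) by ring.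
    eapply Rle_trans. apply Rabs_triang. rewrite !Rabs_mult.
    apply Rle_trans with (Rabs a * d' + Rabs b * d'). apply Rplus_le_compat; apply Rmult_le_compat_l; auto.
    apply Rle_trans with ((Rabs a + Rabs b + 1) * (d / (Rabs a + Rabs b + 1))).
    apply Rle_trans with ((Rabs a + Rabs b + 1) * d'). nra. apply Rmult_le_compat_l; lra.
    right; field; lra. }
  assert (Ha : Rabs (a * (integ Alg mu h1 - rep_int mu r1)) <= Rabs a * e) by (rewrite Rabs_mult; apply Rmult_le_compat_l; auto).
  assert (Hb : Rabs (b * (integ Alg mu h2 - rep_int mu r2)) <= Rabs b * e) by (rewrite Rabs_mult; apply Rmult_le_compat_l; auto).
  apply Rabs_le_inv in Hx, Ha, Hb. apply Rabs_def1.
  assert (e * (2 * (Rabs a + Rabs b + 1)) = eps) by (unfold e; field; lra). nra.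
  assert (e * (2 * (Rabs a + Rabs b + 1)) = eps) by (unfold e; field; lra). nra. Qed.
Lemma integ_pos (Hpos : forall A, Alg A -> 0 <= mu A) h : is_B Alg h -> (forall w, 0 <= h w) -> 0 <= integ Alg mu h.
Proof. intros Hh H0. assert (T0 : 0 <= mu setT) by (apply Hpos, alg_full; auto).
  apply Ropp_le_cancel. rewrite Ropp_0. apply (le_eps _ 0 (1 + mu setT)). lra.
  intros eps He. destruct (integ_spec Alg HAlg mu Hmu h Hh eps He) as [d [Hd G]].
  destruct (B_approx Alg h (Rmin d eps) Hh) as [r [Hr Hhr]]. apply Rmin_pos; auto.
  assert (G1 := G r Hr (fun w => Rle_trans _ _ _ (Hhr w) (Rmin_l _ _))).
  assert (G2 : rep_int mu [(-eps, setT)] <= rep_int mu r).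
  { apply (rep_mono Alg HAlg mu (ba_add Alg mu Hmu) Hpos); auto. constructor; [apply alg_full; auto|constructor].
    intro w. specialize (Hhr w). specialize (H0 w). assert (Rmin d eps <= eps) by apply Rmin_r.
    apply Rabs_le_inv in Hhr. assert (E : rep_eval [(-eps, @setT Om)] w = -eps) by (unfold rep_eval, indic, setT; simpl; lra).
    rewrite E. lra. }
  change (rep_int mu [(-eps, setT)]) with (-eps * mu setT + 0) in G2. apply Rabs_le_inv in G1.
  replace (-eps * mu setT + 0) with (- (eps * mu setT)) in G2 by ring. rewrite Rmult_plus_distr_l, Rmult_1_r. lra. Qed.
Lemma integ_mono (Hpos : forall A, Alg A -> 0 <= mu A) h1 h2 : is_B Alg h1 -> is_B Alg h2 ->
  (forall w, h1 w <= h2 w) -> integ Alg mu h1 <= integ Alg mu h2.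
Proof. intros H1 H2 H. assert (G := integ_pos Hpos (fun w => 1 * h2 w + -1 * h1 w) (B_lin Alg h2 h1 1 (-1) H2 H1)).
  rewrite integ_lin in G; auto. assert (0 <= 1 * integ Alg mu h2 + -1 * integ Alg mu h1); [|lra].
  apply G. intro w. specialize (H w). lra. Qed.
End Integ2.

Lemma integ_lin_mu {Om} Alg (HAlg : is_algebra Alg) (m1 m2 : (Om -> bool) -> R) a b h :
  is_ba Alg m1 -> is_ba Alg m2 -> is_B Alg h ->
  integ Alg (fun A => a * m1 A + b * m2 A) h = a * integ Alg m1 h + b * integ Alg m2 h.
Proof. intros H1 H2 Hh. apply integ_eq; auto. apply ba_lin; auto.
  intros eps He. assert (0 <= Rabs a) by apply Rabs_pos; assert (0 <= Rabs b) by apply Rabs_pos.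
  set (e := eps / (Rabs a + Rabs b + 1)). assert (Hep : 0 < e) by (apply Rdiv_lt_0_compat; lra).
  destruct (integ_spec Alg HAlg m1 H1 h Hh e Hep) as [d1 [Hd1 G1]].
  destruct (integ_spec Alg HAlg m2 H2 h Hh e Hep) as [d2 [Hd2 G2]].
  exists (Rmin d1 d2). split. apply Rmin_pos; auto. intros r Hr Hhr. rewrite rep_int_lin.
  assert (E1 := G1 r Hr (fun w => Rle_trans _ _ _ (Hhr w) (Rmin_l _ _))).
  assert (E2 := G2 r Hr (fun w => Rle_trans _ _ _ (Hhr w) (Rmin_r _ _))).
  assert (Ha : Rabs (a * (integ Alg m1 h - rep_int m1 r)) <= Rabs a * e) by (rewrite Rabs_mult; apply Rmult_le_compat_l; auto).
  assert (Hb : Rabs (b * (integ Alg m2 h - rep_int m2 r)) <= Rabs b * e) by (rewrite Rabs_mult; apply Rmult_le_compat_l; auto).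
  apply Rabs_le_inv in Ha, Hb. apply Rabs_le. assert (e * (Rabs a + Rabs b + 1) = eps) by (unfold e; field; lra). nra. Qed.
Lemma integ_indic {Om} Alg (HAlg : is_algebra Alg) (m : (Om -> bool) -> R) (Hm : is_ba Alg m) c E :
  Alg E -> integ Alg m (fun w => c * indic E w) = c * m E.
Proof. intros HE. rewrite (integ_rep Alg HAlg m Hm (fun w => c * indic E w) [(c, E)]). unfold rep_int; simpl; ring.
  constructor; auto. intro w. unfold rep_eval; simpl. ring. Qed.

Section Simple.
Context {Om : Type} (Alg : (Om -> bool) -> Prop) (HAlg : is_algebra Alg).
Lemma simp_B f : is_simple Alg f -> is_B Alg f.
Proof. intros [r [Hr Hf]]. eapply B_rep; eauto. Qed.
Lemma simp_lin f g a b : is_simple Alg f -> is_simple Alg g -> is_simple Alg (fun w => a * f w + b * g w).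
Proof. intros [r1 [H1 E1]] [r2 [H2 E2]]. exists (rep_scale a r1 ++ rep_scale b r2). split.
  apply rep_ok_app; apply rep_ok_scale; auto. intro w. rewrite rep_eval_app, !rep_eval_scale, E1, E2; auto. Qed.
Lemma simp_mul f g : is_simple Alg f -> is_simple Alg g -> is_simple Alg (fun w => f w * g w).
Proof. intros [r1 [H1 E1]] [r2 [H2 E2]]. exists (rep_mul r1 r2). split. apply rep_ok_mul; auto.
  intro w. rewrite rep_eval_mul, E1, E2; auto. Qed.
Lemma simp_fun f (F : R -> R) : is_simple Alg f -> is_simple Alg (fun w => F (f w)).
Proof. intros [r [H E]]. destruct (rep_fun Alg HAlg r F H) as [r' [H' E']]. exists r'. split; auto.
  intro w. rewrite E', E; auto. Qed.
Lemma simp_const c : is_simple Alg (fun _ => c).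
Proof. exists [(c, setT)]. split. constructor; [apply alg_full; auto|constructor].
  intro w. unfold rep_eval, indic, setT; simpl; lra. Qed.
Lemma simp_indic A : Alg A -> is_simple Alg (indic A).
Proof. intros HA. exists [(1, A)]. split. constructor; auto. intro w. unfold rep_eval; simpl; lra. Qed.
Lemma simp_step l v A : part Alg A l -> is_simple Alg (step l v).
Proof. intros Hl. exists (rep_of_part v l). split. eapply rep_of_part_ok; eauto. intro; apply step_rep. Qed.
Lemma simp_ext f g : (forall w, f w = g w) -> is_simple Alg f -> is_simple Alg g.
Proof. intros H. replace g with f; auto. apply functional_extensionality; auto. Qed.
Lemma simp_sub f g : is_simple Alg f -> is_simple Alg g -> is_simple Alg (fun w => f w - g w).
Proof. intros H1 H2. eapply simp_ext; [|apply (simp_lin f g 1 (-1)); auto]. intro; simpl; ring. Qed.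
Lemma simp_sumR {X} (F : X -> Om -> R) (l : list X) : (forall x, In x l -> is_simple Alg (F x)) ->
  is_simple Alg (fun w => sumR (map (fun x => F x w) l)).
Proof. induction l; simpl; intros H. apply simp_const.
  assert (G := simp_lin (F a) _ 1 1 (H a (or_introl eq_refl)) (IHl (fun x h => H x (or_intror h)))).
  eapply simp_ext; [|exact G]. intro; simpl; lra. Qed.
End Simple.

Lemma simple_bounded {Om} Alg (g : Om -> R) : is_simple Alg g -> exists K, 0 <= K /\ forall w, Rabs (g w) <= K.
Proof. intros [r [Hr E]]. exists (rep_norm r). split. apply rep_norm_nonneg. intro w. rewrite E; apply rep_eval_norm. Qed.
Lemma indic_bound {Om} (k : Om -> R) K A w : (forall w, Rabs (k w) <= K) -> Rabs (k w * indic A w) <= K.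
Proof. intros H. rewrite Rabs_mult. unfold indic. destruct (A w). rewrite Rabs_R1, Rmult_1_r; auto.
  rewrite Rabs_R0, Rmult_0_r. eapply Rle_trans; [apply Rabs_pos|apply (H w)]. Qed.

Section PosInt.
Context {Om : Type} (Alg : (Om -> bool) -> Prop) (HAlg : is_algebra Alg)
  (rho : (Om -> bool) -> R) (Hrho : is_ba Alg rho) (Hpos : forall A, Alg A -> 0 <= rho A).

Notation I := (integ Alg rho).

Lemma I_lin f g a b : is_simple Alg f -> is_simple Alg g -> I (fun w => a * f w + b * g w) = a * I f + b * I g.
Proof. intros; apply integ_lin; auto; apply simp_B; auto. Qed.
Lemma I_ext f g : (forall w, f w = g w) -> I f = I g.
Proof. intros H. f_equal. apply functional_extensionality; auto. Qed.
Lemma I_mono f g : is_simple Alg f -> is_simple Alg g -> (forall w, f w <= g w) -> I f <= I g.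
Proof. intros; apply integ_mono; auto; apply simp_B; auto. Qed.
Lemma I_const c : I (fun _ => c) = c * rho setT.
Proof. rewrite (integ_rep Alg HAlg rho Hrho _ [(c, setT)]). unfold rep_int; simpl; lra.
  constructor; [apply alg_full; auto|constructor]. intro w. unfold rep_eval, indic, setT; simpl; lra. Qed.
Lemma I_sumR {X} (F : X -> Om -> R) (l : list X) : (forall x, In x l -> is_simple Alg (F x)) ->
  I (fun w => sumR (map (fun x => F x w) l)) = sumR (map (fun x => I (F x)) l).
Proof. induction l; simpl; intros H. rewrite I_const; lra.
  rewrite <- IHl; auto. rewrite <- (Rmult_1_l (I (F a))), <- (Rmult_1_l (I (fun w => sumR _))).
  rewrite <- I_lin. apply I_ext; intro; lra. auto. apply simp_sumR; auto. Qed.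
Lemma I_step l v : part Alg setT l -> I (step l v) = sumR (map (fun B => v B * rho B) l).
Proof. intros Hl. rewrite (integ_rep Alg HAlg rho Hrho _ (rep_of_part v l)).
  unfold rep_int, rep_of_part. rewrite map_map. reflexivity. eapply rep_of_part_ok; eauto.
  intro; apply step_rep. Qed.
Lemma I_on_part f l v : part Alg setT l -> (forall B w, In B l -> B w = true -> f w = v B) ->
  I f = sumR (map (fun B => v B * rho B) l).
Proof. intros Hl H. rewrite <- I_step; auto. apply I_ext. intro w.
  destruct (part_T_in Alg l w Hl) as [B [HB Hw]]. rewrite (step_val Alg l v B w); auto. Qed.
Lemma I_on_refine f l m v : part Alg setT l -> part Alg setT m ->
  (forall B C w, In B l -> In C m -> B w = true -> C w = true -> f w = v B C) ->
  I f = sumR (map (fun B => sumR (map (fun C => v B C * rho (inter B C)) m)) l).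
Proof. intros Hl Hm H.
  assert (Hr : part Alg (inter setT setT) (refine l m)) by (apply part_refine; auto).
  replace (inter (@setT Om) setT) with (@setT Om) in Hr by seteq.
  rewrite (integ_rep Alg HAlg rho Hrho _ (flat_map (fun B => map (fun C => (v B C, inter B C)) m) l)).
  - unfold rep_int. rewrite sumR_flat_map. apply sumR_map_ext. intros B _. rewrite map_map. reflexivity.
  - unfold rep_ok. apply Forall_forall. intros x Hx. apply in_flat_map in Hx. destruct Hx as [B [HB Hx]].
    apply in_map_iff in Hx. destruct Hx as [C [<- HC]]. simpl. destruct Hl as [L1 _], Hm as [M1 _].
    rewrite Forall_forall in L1, M1. apply alg_inter; auto.
  - intro w. unfold rep_eval. rewrite sumR_flat_map.
    destruct (part_T_in Alg l w Hl) as [B [HB Hw]]. destruct (part_T_in Alg m w Hm) as [C [HC HCw]].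
    rewrite (H B C w HB HC Hw HCw). destruct Hl as [L1 [L2 L3]]. symmetry.
    transitivity (sumR (map (fun B' => sumR (map (fun C' => v B' C' * indic C' w) m) * indic B' w) l)).
    + apply sumR_map_ext. intros B' _. rewrite map_map. simpl. rewrite Rmult_comm, <- sumR_map_scal.
      apply sumR_map_ext. intros C' _. unfold indic, inter. destruct (B' w), (C' w); simpl; lra.
    + apply sum_part_point; auto. rewrite <- L3; reflexivity.
      intros B' HB' HB'w. rewrite (pw_disj_in_eq l B' B w) by auto. destruct Hm as [M1 [M2 M3]].
      apply sum_part_point; auto. rewrite <- M3; reflexivity.
      intros C' HC' HC'w. rewrite (pw_disj_in_eq m C' C w) by auto. reflexivity.
Qed.
(* Cauchy-Schwarz, via positivity of rho((|u| - t)^2) at t = rho|u|/rho(Omega). *)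
Lemma I_cauchy_schwarz u : is_simple Alg u -> (I (fun w => Rabs (u w))) ^ 2 <= rho setT * I (fun w => u w ^ 2).
Proof. intros Hu. assert (T0 : 0 <= rho setT) by (apply Hpos, alg_full; auto).
  assert (Ha : is_simple Alg (fun w => Rabs (u w))) by (apply (simp_fun Alg HAlg u Rabs); auto).
  assert (Hs : is_simple Alg (fun w => u w ^ 2)) by (apply (simp_fun Alg HAlg u (fun x => x ^ 2)); auto).
  set (a := I (fun w => Rabs (u w))). set (q := I (fun w => u w ^ 2)).
  destruct (Req_dec (rho setT) 0) as [E|E].
  - assert (a = 0).
    { unfold a. destruct Hu as [r [Hr Er]]. apply Rle_antisym.
      assert (G := integ_bound Alg HAlg rho Hrho (fun w => Rabs (u w)) (rep_norm r)).
      unfold total_var in G. rewrite tv_pos_eq in G; auto. rewrite E in G.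
      assert (G' : Rabs (integ Alg rho (fun w : Om => Rabs (u w))) <= 0).
      { rewrite <- (Rmult_0_r (rep_norm r)). apply G. apply simp_B; exact Ha.
        intro w. rewrite Rabs_Rabsolu, Er. apply rep_eval_norm. }
      apply Rabs_le_inv in G'. lra. apply alg_full; auto.
      apply integ_pos; auto. apply simp_B; exact Ha. intros; apply Rabs_pos. }
    rewrite H, E; lra.
  - set (t := a / rho setT).
    assert (G : 0 <= I (fun w => (Rabs (u w) - t) ^ 2)).
    { apply integ_pos; auto. apply simp_B. apply (simp_fun Alg HAlg u (fun x => (Rabs x - t) ^ 2)); auto.
      intro; apply pow2_ge_0. }
    assert (E2 : I (fun w => (Rabs (u w) - t) ^ 2) = 1 * q + (- 2 * t) * a + (t ^ 2 * rho setT)).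
    { rewrite (I_ext _ (fun w => 1 * (fun w => 1 * u w ^ 2 + (-2 * t) * Rabs (u w)) w + (t ^ 2) * (fun _ => 1) w)).
      rewrite I_lin, I_lin, I_const; auto. unfold q, a. ring.
      all: try (apply simp_lin; auto); try apply simp_const; try exact HAlg; try (intro w; rewrite <- (pow2_abs (u w)); ring). }
    rewrite E2 in G. assert (0 < rho setT) by lra.
    unfold t in G. assert (G' : 0 <= rho setT * (q + -2 * (a / rho setT) * a + (a / rho setT) ^ 2 * rho setT)) by nra.
    replace (rho setT * (q + -2 * (a / rho setT) * a + (a / rho setT) ^ 2 * rho setT)) with (rho setT * q - a ^ 2) in G' by (field; lra).
    lra.
Qed.
End PosInt.

(* To a partition l attach the step density
   [cond_dens l] = nu(B)/rho(B) on each cell B, and its energy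
   [energy l] = sum_B nu(B)^2/rho(B) = rho((cond_dens l)^2).  Energies are
   bounded by c^2 rho(Omega) and increase under refinement, with
   rho((g_{l&m} - g_l)^2) = energy(l&m) - energy(l).  Refining a sequence of
   partitions with energies tending to the supremum gives densities that are
   Cauchy in L^2(rho), hence in L^1(rho) by Cauchy-Schwarz, and whose
   density measures converge to nu in total variation. *)
Section RadonNikodym.
Context {Om : Type} (Alg : (Om -> bool) -> Prop) (HAlg : is_algebra Alg)
  (rho : (Om -> bool) -> R) (Hrho : is_ba Alg rho) (Hpos : forall A, Alg A -> 0 <= rho A)
  (nu : (Om -> bool) -> R) (Hnu : is_ba Alg nu) (c : R) (Hc : 0 <= c)
  (Hdom : forall A, Alg A -> Rabs (nu A) <= c * rho A).

Notation I := (integ Alg rho).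

(* nu(B)/rho(B), with value 0 on rho-null cells (where nu vanishes too). *)
Definition ratio B := nu B / rho B.
Lemma nu_zero B : Alg B -> rho B = 0 -> nu B = 0.
Proof. intros HB E. assert (G := Hdom B HB). rewrite E, Rmult_0_r in G.
  assert (G' := Rabs_pos (nu B)). assert (Rabs (nu B) = 0) by lra. unfold Rabs in *; destruct (Rcase_abs (nu B)); lra. Qed.
Lemma ratio_mul B : Alg B -> ratio B * rho B = nu B.
Proof. intros HB. unfold ratio. destruct (Req_dec (rho B) 0) as [E|E].
  - rewrite E, nu_zero; auto. lra.
  - field; auto. Qed.
Lemma ratio_bound B : Alg B -> Rabs (ratio B) <= c.
Proof. intros HB. unfold ratio. destruct (Req_dec (rho B) 0) as [E|E].
  - rewrite E. unfold Rdiv. rewrite Rinv_0, Rmult_0_r, Rabs_R0; lra.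
  - assert (0 < rho B) by (assert (G := Hpos B HB); lra). unfold Rdiv. rewrite Rabs_mult, Rabs_inv.
    rewrite (Rabs_right (rho B)) by lra. apply (Rmult_le_reg_r (rho B)); auto.
    rewrite Rmult_assoc, Rinv_l; auto. rewrite Rmult_1_r. apply Hdom; auto. Qed.
Definition cond_dens (l : list (Om -> bool)) := step l ratio.
Definition energy (l : list (Om -> bool)) := sumR (map (fun B => ratio B * nu B) l).
Lemma cond_dens_simple l : part Alg setT l -> is_simple Alg (cond_dens l).
Proof. intros; eapply simp_step; eauto. Qed.
Lemma cond_dens_bound l w : part Alg setT l -> Rabs (cond_dens l w) <= c.
Proof. intros Hl. destruct (part_T_in Alg l w Hl) as [B [HB Hw]]. unfold cond_dens.
  rewrite (step_val Alg l ratio B w); auto. apply ratio_bound. destruct Hl as [H1 _].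
  rewrite Forall_forall in H1; auto. Qed.
Lemma energy_bound l : part Alg setT l -> energy l <= c * c * rho setT.
Proof. intros Hl. rewrite (mu_part Alg HAlg rho Hrho setT l (alg_full _ HAlg) Hl).
  rewrite <- sumR_map_scal. apply sumR_map_le. intros B HB. destruct Hl as [H1 _].
  rewrite Forall_forall in H1. assert (HB' := H1 B HB).
  rewrite <- (ratio_mul B) by auto. assert (G := ratio_bound B HB'). assert (0 <= rho B) by auto.
  apply Rabs_le_inv in G. assert (H2 : ratio B * ratio B <= c * c) by nra.
  rewrite <- Rmult_assoc. apply Rmult_le_compat_r; auto. Qed.
Lemma I_cond_dens_sq l : part Alg setT l -> I (fun w => cond_dens l w * cond_dens l w) = energy l.
Proof. intros Hl. rewrite (I_on_part Alg HAlg rho Hrho _ l (fun B => ratio B * ratio B)); auto.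
  apply sumR_map_ext. intros B HB. destruct Hl as [H1 _]. rewrite Forall_forall in H1.
  rewrite Rmult_assoc, ratio_mul; auto.
  intros B w HB Hw. unfold cond_dens. rewrite (step_val Alg l ratio B w); auto. Qed.
Lemma part_refine_T l m : part Alg setT l -> part Alg setT m -> part Alg setT (refine l m).
Proof. intros. replace (@setT Om) with (inter (@setT Om) setT) by seteq. apply part_refine; auto. Qed.
Lemma nu_split B m : Alg B -> part Alg setT m -> sumR (map (fun C => nu (inter B C)) m) = nu B.
Proof. intros HB Hm. rewrite (mu_part Alg HAlg nu Hnu B (map (fun C => inter C B) m)); auto.
  rewrite map_map. apply sumR_map_ext. intros; f_equal; seteq. apply part_map_inter; auto. Qed.
(* rho(g_{l&m} g_l) = energy(l): g_l is the conditional expectation of g_{l&m}. *)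
Lemma I_cond_dens_prod l m : part Alg setT l -> part Alg setT m -> I (fun w => cond_dens (refine l m) w * cond_dens l w) = energy l.
Proof. intros Hl Hm. assert (Hr := part_refine_T l m Hl Hm).
  rewrite (I_on_refine Alg HAlg rho Hrho _ l m (fun B C => ratio (inter B C) * ratio B)); auto.
  - unfold energy. apply sumR_map_ext. intros B HB. assert (H1 := proj1 Hl). assert (M1 := proj1 Hm).
    rewrite Forall_forall in H1, M1.
    rewrite (sumR_map_ext _ (fun C => ratio B * nu (inter B C))). rewrite sumR_map_scal, nu_split; auto.
    intros C HC. rewrite (Rmult_comm (ratio (inter B C))), Rmult_assoc, ratio_mul; auto.
    apply alg_inter; auto.
  - intros B C w HB HC Hw HCw. unfold cond_dens. rewrite (step_val Alg l ratio B w); auto.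
    rewrite (step_val Alg (refine l m) ratio (inter B C) w); auto. apply In_refine; eauto.
    unfold inter; rewrite Hw, HCw; auto. Qed.
(* The Pythagoras identity behind the whole construction. *)
Lemma energy_diff l m : part Alg setT l -> part Alg setT m ->
  I (fun w => (cond_dens (refine l m) w - cond_dens l w) ^ 2) = energy (refine l m) - energy l.
Proof. intros Hl Hm. assert (Hr := part_refine_T l m Hl Hm).
  assert (S1 := cond_dens_simple _ Hr). assert (S2 := cond_dens_simple _ Hl).
  rewrite (I_ext Alg rho _ (fun w => 1 * (fun w => 1 * (cond_dens (refine l m) w * cond_dens (refine l m) w) + (-2) * (cond_dens (refine l m) w * cond_dens l w)) w + 1 * (cond_dens l w * cond_dens l w))).
  rewrite I_lin, I_lin, I_cond_dens_sq, I_cond_dens_sq, I_cond_dens_prod; auto. ring.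
  all: try (apply simp_lin; auto); try (apply (simp_mul Alg HAlg); auto). intro; ring. Qed.
Lemma energy_mono l m : part Alg setT l -> part Alg setT m -> energy l <= energy (refine l m).
Proof. intros Hl Hm. assert (Hr := part_refine_T l m Hl Hm).
  assert (G := integ_pos Alg HAlg rho Hrho Hpos (fun w => (cond_dens (refine l m) w - cond_dens l w) ^ 2)).
  rewrite energy_diff in G; auto. enough (0 <= energy (refine l m) - energy l) by lra. apply G.
  apply simp_B. apply (simp_fun Alg HAlg (fun w => cond_dens (refine l m) w - cond_dens l w) (fun x => x ^ 2)). apply simp_sub; apply cond_dens_simple; auto.
  intro; apply pow2_ge_0. Qed.
Lemma energy_comm l m : energy (refine l m) = energy (refine m l).
Proof. unfold energy, refine. rewrite !sumR_flat_map.
  transitivity (sumR (map (fun B => sumR (map (fun C => ratio (inter B C) * nu (inter B C)) m)) l)).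
  apply sumR_map_ext; intros; rewrite map_map; reflexivity. rewrite sumR_swap. apply sumR_map_ext. intros C _.
  rewrite !map_map. apply sumR_map_ext. intros B _. replace (inter C B) with (inter B C) by seteq. auto. Qed.
Lemma energy_mono_r l m : part Alg setT l -> part Alg setT m -> energy m <= energy (refine l m).
Proof. intros. rewrite energy_comm. apply energy_mono; auto. Qed.
Definition energies := fun s => exists l, part Alg setT l /\ s = energy l.
Definition sup_energy := Rsup energies.
Lemma sup_energy_lub : is_lub energies sup_energy.
Proof. apply Rsup_lub. exists (energy [setT]). exists [setT]; split; auto. apply part_T_single; auto.
  exists (c * c * rho setT). intros x [l [Hl ->]]. apply energy_bound; auto. Qed.
Lemma energy_le_sup l : part Alg setT l -> energy l <= sup_energy.
Proof. intros Hl. apply sup_energy_lub. exists l; auto. Qed.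
Lemma near_sup_energy n : exists l, part Alg setT l /\ sup_energy - / INR (S n) < energy l.
Proof. apply NNPP. intro H. assert (Hp : 0 < / INR (S n)) by (apply Rinv_0_lt_compat, lt_0_INR; lia).
  assert (sup_energy <= sup_energy - / INR (S n)); [|lra]. apply sup_energy_lub. intros x [l [Hl ->]].
  destruct (Rle_dec (energy l) (sup_energy - / INR (S n))) as [G|G]; auto. exfalso; apply H. exists l; split; auto; lra. Qed.
Definition near_max_part n := proj1_sig (constructive_indefinite_description _ (near_sup_energy n)).
Lemma near_max_part_spec n : part Alg setT (near_max_part n) /\ sup_energy - / INR (S n) < energy (near_max_part n).
Proof. unfold near_max_part. destruct constructive_indefinite_description; simpl; auto. Qed.
Fixpoint max_parts (n : nat) : list (Om -> bool) :=
  match n with O => near_max_part O | S k => refine (max_parts k) (near_max_part (S k)) end.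
Lemma max_parts_part n : part Alg setT (max_parts n).
Proof. induction n; simpl. apply near_max_part_spec. apply part_refine_T; auto. apply near_max_part_spec. Qed.
Lemma max_parts_near n : sup_energy - / INR (S n) < energy (max_parts n).
Proof. destruct n; simpl. apply (near_max_part_spec 0). destruct (near_max_part_spec (S n)) as [H1 H2].
  eapply Rlt_le_trans; [exact H2|]. apply energy_mono_r; auto. apply max_parts_part. Qed.
Lemma max_parts_refines n k : exists X, part Alg setT X /\ max_parts (k + n) = refine (max_parts n) X.
Proof. induction k; simpl.
  - exists [setT]. split. apply part_T_single; auto. unfold refine. clear.
    induction (max_parts n); simpl; auto. rewrite <- IHl at 1. f_equal. f_equal. seteq.
  - destruct IHk as [X [HX E]]. exists (refine X (near_max_part (S (k + n)))). split.
    apply part_refine_T; auto. apply near_max_part_spec. rewrite E, refine_assoc. auto. Qed.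
Lemma max_parts_L2 n m : (n <= m)%nat -> I (fun w => (cond_dens (max_parts m) w - cond_dens (max_parts n) w) ^ 2) <= / INR (S n).
Proof. intros Hnm. destruct (max_parts_refines n (m - n)) as [X [HX E]]. replace (m - n + n)%nat with m in E by lia.
  rewrite E, energy_diff; auto. 2: apply max_parts_part. assert (G := energy_le_sup (refine (max_parts n) X)).
  assert (G2 := max_parts_near n). assert (energy (refine (max_parts n) X) <= sup_energy). apply G. apply part_refine_T; auto. apply max_parts_part.
  lra. Qed.
Lemma max_parts_L1 n m : (n <= m)%nat -> (I (fun w => Rabs (cond_dens (max_parts m) w - cond_dens (max_parts n) w))) ^ 2 <= rho setT * / INR (S n).
Proof. intros Hnm. eapply Rle_trans. apply (I_cauchy_schwarz Alg HAlg rho Hrho Hpos (fun w => cond_dens (max_parts m) w - cond_dens (max_parts n) w)).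
  apply simp_sub; apply cond_dens_simple; apply max_parts_part. apply Rmult_le_compat_l. apply Hpos, alg_full; auto.
  apply max_parts_L2; auto. Qed.
Lemma I_step_indic l v C : part Alg setT l -> Alg C ->
  I (fun w => step l v w * indic C w) = sumR (map (fun B => v B * rho (inter B C)) l).
Proof. intros Hl HC. rewrite (integ_rep Alg HAlg rho Hrho _ (map (fun B => (v B, inter B C)) l)).
  unfold rep_int. rewrite map_map. reflexivity.
  unfold rep_ok. apply Forall_map. destruct Hl as [H1 _]. eapply Forall_impl; [|exact H1]. intros; apply alg_inter; auto.
  intro w. unfold step, rep_eval. rewrite map_map. simpl. rewrite Rmult_comm, <- sumR_map_scal.
  apply sumR_map_ext. intros B _. unfold indic, inter. destruct (B w), (C w); simpl; lra. Qed.
Lemma I_cond_dens_indic l P C : part Alg setT l -> part Alg setT P -> In C P ->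
  I (fun w => cond_dens (refine l P) w * indic C w) = nu C.
Proof. intros Hl HP HC. assert (Hr := part_refine_T l P Hl HP).
  assert (HCa : Alg C) by (destruct HP as [H1 _]; rewrite Forall_forall in H1; auto).
  unfold cond_dens. rewrite I_step_indic; auto.
  rewrite (mu_part Alg HAlg nu Hnu C (map (fun x => inter x C) (refine l P))); auto.
  2: apply part_map_inter; auto. rewrite map_map. apply sumR_map_ext. intros x Hx.
  assert (Hxa : Alg x) by (destruct Hr as [H1 _]; rewrite Forall_forall in H1; auto).
  destruct HP as [P1 [P2 P3]]. destruct (refine_cell_inter l P C x P2 HC Hx) as [E|E]; rewrite E.
  apply ratio_mul; auto. rewrite (mu_set0 Alg HAlg rho (ba_add _ _ Hrho)), (mu_set0 Alg HAlg nu (ba_add _ _ Hnu)). lra. Qed.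
Definition dens (g : Om -> R) (A : Om -> bool) := I (fun w => g w * indic A w).
(* |nu - g_n rho|(Omega) <= sqrt(rho(Omega)/(n+1)): on a cell C of any
   partition P, nu(C) - (g_n rho)(C) = rho((g_{n&P} - g_n) 1_C). *)
Lemma tv_dens_diff n : tv Alg (fun A => nu A - dens (cond_dens (max_parts n)) A) setT <= sqrt (rho setT * / INR (S n)).
Proof. apply tv_le_gen. apply alg_full; auto. intros P HP.
  set (l := max_parts n). assert (Hl : part Alg setT l) by apply max_parts_part.
  assert (Hr := part_refine_T l P Hl HP).
  set (d := fun w => cond_dens (refine l P) w - cond_dens l w).
  assert (Hd : is_simple Alg d) by (apply simp_sub; apply cond_dens_simple; auto).
  assert (HPa : forall C, In C P -> Alg C) by (destruct HP as [H1 _]; rewrite Forall_forall in H1; auto).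
  assert (E1 : forall C, In C P -> Rabs (nu C - dens (cond_dens l) C) <= I (fun w => Rabs (d w) * indic C w)).
  { intros C HC.
    set (fa := fun w => cond_dens (refine l P) w * indic C w). set (fb := fun w => cond_dens l w * indic C w).
    assert (Sa : is_simple Alg fa) by (apply (simp_mul Alg HAlg); [apply cond_dens_simple; auto|apply simp_indic; auto]).
    assert (Sb : is_simple Alg fb) by (apply (simp_mul Alg HAlg); [apply cond_dens_simple; auto|apply simp_indic; auto]).
    assert (Sc : is_simple Alg (fun w => Rabs (d w) * indic C w)) by (apply (simp_mul Alg HAlg); [apply (simp_fun Alg HAlg d Rabs); auto|apply simp_indic; auto]).
    assert (Hsub : I (fun w => 1 * fa w + -1 * fb w) = 1 * I fa + -1 * I fb) by (apply I_lin; auto).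
    assert (Enu : I fa = nu C) by (apply I_cond_dens_indic; auto).
    assert (M1 : I (fun w => 1 * fa w + -1 * fb w) <= I (fun w => Rabs (d w) * indic C w)).
    { apply I_mono; auto. apply simp_lin; auto. intro w. unfold fa, fb, d, indic.
      assert (G := Rabs_le_inv _ _ (Rle_refl (Rabs (cond_dens (refine l P) w - cond_dens l w)))). destruct (C w); lra. }
    assert (M2 : I (fun w => -1 * (Rabs (d w) * indic C w) + 0 * 0) <= I (fun w => 1 * fa w + -1 * fb w)).
    { apply I_mono; auto. apply simp_lin; auto. apply (simp_const Alg HAlg). apply simp_lin; auto. intro w. unfold fa, fb, d, indic.
      assert (G := Rabs_le_inv _ _ (Rle_refl (Rabs (cond_dens (refine l P) w - cond_dens l w)))). destruct (C w); lra. }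
    rewrite (I_lin Alg HAlg rho Hrho (fun w => Rabs (d w) * indic C w) (fun _ => 0)) in M2; auto. 2: apply (simp_const Alg HAlg).
    unfold dens. fold fb. rewrite <- Enu. apply Rabs_le. lra. }
  assert (E2 : sumR (map (fun C => I (fun w => Rabs (d w) * indic C w)) P) = I (fun w => Rabs (d w))).
  { rewrite <- (I_sumR Alg HAlg rho Hrho). apply I_ext. intro w. rewrite sumR_map_scal, (sum_indic_part Alg P w HP). ring.
    intros; apply (simp_mul Alg HAlg); [apply (simp_fun Alg HAlg d Rabs); auto|apply simp_indic; auto]. }
  assert (E3 : (I (fun w => Rabs (d w))) ^ 2 <= rho setT * / INR (S n)).
  { eapply Rle_trans. apply (I_cauchy_schwarz Alg HAlg rho Hrho Hpos d Hd). apply Rmult_le_compat_l. apply Hpos, alg_full; auto.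
    unfold d. rewrite energy_diff; auto. assert (G := max_parts_near n). fold l in G.
    assert (energy (refine l P) <= sup_energy) by (apply energy_le_sup; auto). lra. }
  assert (E4 : 0 <= I (fun w => Rabs (d w))) by (apply integ_pos; auto; [apply simp_B, (simp_fun Alg HAlg d Rabs); auto|intro; apply Rabs_pos]).
  eapply Rle_trans. apply sumR_map_le. exact E1. rewrite E2.
  rewrite <- (sqrt_pow2 (I (fun w => Rabs (d w)))) by auto. apply sqrt_le_1_alt. auto. Qed.
End RadonNikodym.

Section Dens.
Context {Om : Type} (Alg : (Om -> bool) -> Prop) (HAlg : is_algebra Alg)
  (rho : (Om -> bool) -> R) (Hrho : is_ba Alg rho).

Notation I := (integ Alg rho).
Notation D := (dens Alg rho).

Lemma dens_ba g : is_simple Alg g -> is_ba Alg (D g).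
Proof. intros Hg. destruct (simple_bounded Alg g Hg) as [K [HK0 HK]]. split.
  - intros A B HA HB Hd. unfold dens.
    rewrite (I_ext Alg rho _ (fun w => 1 * (g w * indic A w) + 1 * (g w * indic B w))).
    rewrite (I_lin Alg HAlg rho Hrho); try apply (simp_mul Alg HAlg); auto; try apply simp_indic; auto. ring.
    intro w. specialize (Hd w). unfold indic, setU. destruct (A w), (B w); simpl in *; try discriminate; ring.
  - exists (K * total_var Alg rho). intros A HA. unfold dens. apply integ_bound; auto.
    apply simp_B, (simp_mul Alg HAlg); auto. apply simp_indic; auto.
    intro w. rewrite Rabs_mult. unfold indic. destruct (A w). rewrite Rabs_R1, Rmult_1_r; auto.
    rewrite Rabs_R0, Rmult_0_r; lra. Qed.
Lemma I_scal f c : is_simple Alg f -> I (fun w => c * f w) = c * I f.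
Proof. intros Hf. rewrite (I_ext Alg rho _ (fun w => c * f w + 0 * (fun _ => 0) w)).
  rewrite (I_lin Alg HAlg rho Hrho); auto. ring. apply (simp_const Alg HAlg). intro; ring. Qed.
Lemma dens_lin g1 g2 a b A : is_simple Alg g1 -> is_simple Alg g2 -> Alg A ->
  D (fun w => a * g1 w + b * g2 w) A = a * D g1 A + b * D g2 A.
Proof. intros H1 H2 HA. unfold dens. rewrite <- (I_lin Alg HAlg rho Hrho).
  apply I_ext; intro; ring. all: apply (simp_mul Alg HAlg); auto; apply simp_indic; auto. Qed.
Lemma dens_integ g h : is_simple Alg g -> is_B Alg h -> integ Alg (D g) h = I (fun w => g w * h w).
Proof. intros Hg Hh. destruct (simple_bounded Alg g Hg) as [K [HK0 HK]].
  assert (Hgh : is_B Alg (fun w => g w * h w)).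
  { destruct Hg as [r [Hr E]]. replace (fun w => g w * h w) with (fun w => h w * rep_eval r w).
    apply B_mul_rep; auto. apply functional_extensionality; intro w; rewrite E; ring. }
  apply integ_eq; auto. apply dens_ba; auto.
  intros eps He. assert (T0 := total_var_nonneg Alg HAlg rho Hrho).
  set (d := eps / (K * total_var Alg rho + 1)). assert (Hd : 0 < d) by (apply Rdiv_lt_0_compat; nra).
  exists d. split; auto. intros r Hr Hhr.
  assert (E : rep_int (D g) r = I (fun w => g w * rep_eval r w)).
  { unfold rep_int, rep_eval. unfold rep_ok in Hr. rewrite Forall_forall in Hr.
    transitivity (sumR (map (fun p => I (fun w => fst p * (g w * indic (snd p) w))) r)).
    - apply sumR_map_ext. intros p Hp. unfold dens. rewrite I_scal; auto.
      apply (simp_mul Alg HAlg); auto. apply simp_indic; auto.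
    - rewrite <- (I_sumR Alg HAlg rho Hrho (fun p w => fst p * (g w * indic (snd p) w))).
      + apply I_ext. intro w. rewrite <- sumR_map_scal. apply sumR_map_ext; intros; ring.
      + intros p Hp. eapply simp_ext; [|apply (simp_lin Alg (fun w => g w * indic (snd p) w) (fun _ => 0) (fst p) 0)].
        intro; simpl; ring. apply (simp_mul Alg HAlg); auto. apply simp_indic; auto. apply (simp_const Alg HAlg). }
  assert (Hr' : is_simple Alg (fun w => g w * rep_eval r w)) by (apply (simp_mul Alg HAlg); auto; exists r; auto).
  rewrite E. rewrite <- (Rmult_1_l (I (fun w => g w * h w))).
  replace (1 * I (fun w => g w * h w) - I (fun w => g w * rep_eval r w)) with (1 * I (fun w => g w * h w) + -1 * I (fun w => g w * rep_eval r w)) by ring.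
  rewrite <- (integ_lin Alg HAlg rho Hrho); auto. 2: apply simp_B; auto.
  eapply Rle_trans. apply integ_bound; auto. apply B_lin; auto. apply simp_B; auto.
  intro w. instantiate (1 := K * d). replace (1 * (g w * h w) + -1 * (g w * rep_eval r w)) with (g w * (h w - rep_eval r w)) by ring.
  rewrite Rabs_mult. apply Rmult_le_compat; auto; apply Rabs_pos.
  assert (d * (K * total_var Alg rho + 1) = eps) by (unfold d; field; nra). nra.
Qed.
End Dens.

Lemma RN_bounded_seq {Om} (Alg : (Om -> bool) -> Prop) (HAlg : is_algebra Alg)
  (rho : (Om -> bool) -> R) (Hrho : is_ba Alg rho) (Hpos : forall A, Alg A -> 0 <= rho A)
  (nu : (Om -> bool) -> R) (Hnu : is_ba Alg nu) (c : R) (Hc : 0 <= c)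
  (Hdom : forall A, Alg A -> Rabs (nu A) <= c * rho A) :
  exists g : nat -> Om -> R, (forall n, is_simple Alg (g n)) /\ (forall n w, Rabs (g n w) <= c) /\
    (forall n m, (n <= m)%nat -> (integ Alg rho (fun w => Rabs (g m w - g n w))) ^ 2 <= rho setT * / INR (S n)) /\
    (forall n, tv Alg (fun A => nu A - dens Alg rho (g n) A) setT <= sqrt (rho setT * / INR (S n))).
Proof. exists (fun n => cond_dens rho nu (max_parts Alg HAlg rho Hrho Hpos nu c Hc Hdom n)). split; [|split; [|split]].
  - intro n. apply (cond_dens_simple Alg rho nu). apply max_parts_part.
  - intros n w. apply (cond_dens_bound Alg rho Hpos nu c Hc Hdom). apply max_parts_part.
  - intros n m Hnm. apply (max_parts_L1 Alg HAlg rho Hrho Hpos nu Hnu c Hc Hdom); auto.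
  - intro n. apply tv_dens_diff; auto. Qed.

Lemma RN_dominated {Om} (Alg : (Om -> bool) -> Prop) (HAlg : is_algebra Alg)
  (rho : (Om -> bool) -> R) (Hrho : is_ba Alg rho) (Hpos : forall A, Alg A -> 0 <= rho A)
  (nu : (Om -> bool) -> R) (Hnu : is_ba Alg nu) (c : R) (Hc : 0 <= c)
  (Hdom : forall A, Alg A -> Rabs (nu A) <= c * rho A) eps :
  0 < eps -> exists g, is_simple Alg g /\ tv Alg (fun A => nu A - dens Alg rho g A) setT <= eps.
Proof. intros He.
  destruct (RN_bounded_seq Alg HAlg rho Hrho Hpos nu Hnu c Hc Hdom) as [g [Gs [_ [_ Gt]]]].
  assert (T0 : 0 <= rho setT) by (apply Hpos, alg_full; auto).
  destruct (sqrt_small (rho setT) eps T0 He) as [N HN].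
  exists (g N). split; auto. eapply Rle_trans; [apply Gt|apply HN; lia]. Qed.

Definition L1_cauchy_for {Om} (Alg : (Om -> bool) -> Prop) (rho : (Om -> bool) -> R)
  (f : nat -> Om -> R) : Prop :=
  forall eps, 0 < eps -> exists N, forall n, (N <= n)%nat -> forall p q,
    integ Alg rho (fun w => Rabs (f (n + p)%nat w - f (n + q)%nat w)) <= eps.

Lemma L1_from_sq {Om} Alg (HAlg : is_algebra Alg) (rho : (Om -> bool) -> R) (Hrho : is_ba Alg rho) (Hpos : forall A, Alg A -> 0 <= rho A)
  (g : nat -> Om -> R) : (forall n, is_simple Alg (g n)) ->
  (forall n m, (n <= m)%nat -> (integ Alg rho (fun w => Rabs (g m w - g n w))) ^ 2 <= rho setT * / INR (S n)) ->
  L1_cauchy_for Alg rho g.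
Proof. intros Hs Hsq eps He. assert (T0 : 0 <= rho setT) by (apply Hpos, alg_full; auto).
  destruct (sqrt_small (rho setT) (eps / 2) T0) as [N HN]. lra.
  exists N. intros n Hn p q.
  assert (X : forall m, (n <= m)%nat -> integ Alg rho (fun w => Rabs (g m w - g n w)) <= eps / 2).
  { intros m Hm. eapply Rle_trans; [|apply (HN n Hn)].
    rewrite <- (sqrt_pow2 (integ Alg rho (fun w => Rabs (g m w - g n w)))). apply sqrt_le_1_alt. apply Hsq; auto.
    apply integ_pos; auto. apply simp_B. apply (simp_fun Alg HAlg (fun w => g m w - g n w) Rabs). apply simp_sub; auto.
    intro; apply Rabs_pos. }
  assert (S1 : is_simple Alg (fun w => Rabs (g (n + p)%nat w - g n w))) by (apply (simp_fun Alg HAlg (fun w => g (n+p)%nat w - g n w) Rabs); apply simp_sub; auto).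
  assert (S2 : is_simple Alg (fun w => Rabs (g (n + q)%nat w - g n w))) by (apply (simp_fun Alg HAlg (fun w => g (n+q)%nat w - g n w) Rabs); apply simp_sub; auto).
  eapply Rle_trans. apply (I_mono Alg HAlg rho Hrho Hpos _ (fun w => 1 * Rabs (g (n + p)%nat w - g n w) + 1 * Rabs (g (n + q)%nat w - g n w))).
  apply (simp_fun Alg HAlg (fun w => g (n+p)%nat w - g (n+q)%nat w) Rabs). apply simp_sub; auto.
  apply simp_lin; auto.
  intro w. replace (g (n + p)%nat w - g (n + q)%nat w) with ((g (n + p)%nat w - g n w) + - (g (n + q)%nat w - g n w)) by ring.
  eapply Rle_trans. apply Rabs_triang. rewrite Rabs_Ropp. lra.
  rewrite (I_lin Alg HAlg rho Hrho); auto. assert (A1 := X (n + p)%nat ltac:(lia)). assert (A2 := X (n + q)%nat ltac:(lia)). lra. Qed.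

(* Jordan-type estimate: if [sg] is at most [b] on every set where it is
   positive, then |sg|(Omega) <= 2b - sg(Omega) (collect the positive cells
   of a partition). *)
Lemma tv_le_pos_part {Om} (Alg : (Om -> bool) -> Prop) (HAlg : is_algebra Alg)
  (sg : (Om -> bool) -> R) (Hsg : is_ba Alg sg) b :
  (forall E, Alg E -> 0 <= sg E -> sg E <= b) -> tv Alg sg setT <= 2 * b - sg setT.
Proof. intros Hb. assert (HT : Alg setT) by (apply alg_full; auto).
  apply tv_le; auto. intros P HP.
  set (p := fun B => if Rlt_dec 0 (sg B) then true else false).
  set (E := bigU (filter p P)).
  assert (ST : sg setT = sumR (map sg P)) by (apply (mu_part Alg HAlg sg Hsg); auto).
  destruct HP as [P1 [P2 P3]].
  assert (HE : Alg E) by (apply alg_bigU; auto; apply Forall_filter; auto).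
  assert (SE : sg E = sumR (map sg (filter p P)))
    by (apply (mu_bigU Alg HAlg sg (ba_add _ _ Hsg)); [apply Forall_filter|apply pw_disj_filter]; auto).
  assert (Eq : sumR (map (fun B => Rabs (sg B)) P) = 2 * sg E - sg setT).
  { rewrite SE, ST, sumR_filter, <- sumR_map_scal, sumR_map_minus. apply sumR_map_ext. intros B _. unfold p.
    destruct (Rlt_dec 0 (sg B)). rewrite Rabs_right; lra. rewrite Rabs_left1; lra. }
  assert (SEp : 0 <= sg E).
  { rewrite SE, sumR_filter. apply sumR_map_nonneg. intros B _. unfold p. destruct (Rlt_dec 0 (sg B)); lra. }
  specialize (Hb E HE SEp). lra. Qed.

Section AbsCont.
Context {Om : Type} (Alg : (Om -> bool) -> Prop) (HAlg : is_algebra Alg)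
  (rho : (Om -> bool) -> R) (Hrho : is_ba Alg rho) (Hpos : forall A, Alg A -> 0 <= rho A)
  (mu : (Om -> bool) -> R) (Hmu : is_ba Alg mu)
  (Hac : forall eps, 0 < eps -> exists delta, 0 < delta /\ forall A, Alg A -> rho A < delta -> tv Alg mu A < eps).

Notation D := (dens Alg rho).

(* A positive [nu <= |mu|] is eps-close in total variation to its truncation
   nu /\ c rho = (nu + c rho - |nu - c rho|)/2 for c large: the sets where
   nu > c rho have small rho-measure, hence small nu-measure. *)
Lemma truncation nu : is_ba Alg nu -> (forall A, Alg A -> 0 <= nu A) -> (forall A, Alg A -> nu A <= tv Alg mu A) ->
  forall eps, 0 < eps -> exists c nc, 0 <= c /\ is_ba Alg nc /\ (forall A, Alg A -> Rabs (nc A) <= c * rho A) /\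
    tv Alg (fun A => nu A - nc A) setT <= eps.
Proof. intros Hnu Hnp Hnt eps He. destruct (Hac eps He) as [dl [Hdl Hd]].
  assert (HT : Alg setT) by (apply alg_full; auto).
  assert (N0 : 0 <= nu setT) by auto.
  set (c := nu setT / dl + 1).
  assert (Hc : 0 < c) by (unfold c; assert (0 <= nu setT / dl) by (unfold Rdiv; apply Rmult_le_pos; [lra|left; apply Rinv_0_lt_compat; lra]); lra).
  set (sg := fun A => 1 * nu A + (- c) * rho A). assert (Hsg : is_ba Alg sg) by (apply ba_lin; auto).
  set (nc := fun A => 1 * (fun A => / 2 * nu A + (/ 2 * c) * rho A) A + (- / 2) * tv Alg sg A).
  assert (Hlo : forall A, Alg A -> Rabs (sg A) <= tv Alg sg A) by (intros; apply tv_abs; auto).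
  assert (Hup : forall A, Alg A -> tv Alg sg A <= 1 * nu A + c * rho A).
  { intros A HA. apply (tv_dom Alg HAlg sg (fun A => 1 * nu A + c * rho A)); auto. apply ba_lin; auto.
    intros X HX. unfold sg. assert (0 <= nu X) by auto. assert (0 <= rho X) by auto. apply Rabs_le. nra. }
  (* Where [sg] is positive, c rho <= nu <= nu(Omega) < c dl, so nu < eps. *)
  assert (Key : tv Alg sg setT <= 2 * eps - sg setT).
  { apply tv_le_pos_part; auto. intros E HE SEp. unfold sg in SEp |- *.
    assert (nu E <= nu setT) by (apply (pos_mono Alg HAlg nu); auto).
    assert (nu setT < c * dl) by (unfold c; replace ((nu setT / dl + 1) * dl) with (nu setT + dl) by (field; lra); lra).
    assert (rho E < dl) by (apply (Rmult_lt_reg_l c); lra).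
    assert (nu E < eps) by (eapply Rle_lt_trans; [apply Hnt; auto|apply Hd; auto]).
    assert (0 <= rho E) by auto. nra. }
  exists c, nc. split; [lra|split; [|split]].
  - unfold nc. apply (ba_lin Alg (fun A => / 2 * nu A + / 2 * c * rho A)); [apply ba_lin|apply tv_ba]; auto.
  - intros A HA. specialize (Hup A HA). specialize (Hlo A HA). apply Rabs_le_inv in Hlo.
    unfold nc, sg in *. assert (0 <= rho A) by auto. apply Rabs_le. lra.
  - rewrite (tv_ext Alg _ (fun A => 1 * nu A + -1 * nc A)) by (intros; cbv beta; ring).
    rewrite tv_pos_eq; auto.
    + unfold nc, sg in *. lra.
    + apply ba_lin; auto. apply ba_lin; [apply ba_lin|apply tv_ba]; auto.
    + intros A HA. specialize (Hlo A HA). apply Rabs_le_inv in Hlo. unfold nc, sg in *. lra. Qed.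

(* Truncate, then approximate the truncation by [RN_dominated]. *)
Lemma RN_pos nu : is_ba Alg nu -> (forall A, Alg A -> 0 <= nu A) -> (forall A, Alg A -> nu A <= tv Alg mu A) ->
  forall eps, 0 < eps -> exists g, is_simple Alg g /\ tv Alg (fun A => nu A - D g A) setT <= eps.
Proof. intros Hnu Hnp Hnt eps He.
  destruct (truncation nu Hnu Hnp Hnt (eps / 2)) as [c [nc [Hc [Hnc [Hncd T1]]]]]; [lra|].
  destruct (RN_dominated Alg HAlg rho Hrho Hpos nc Hnc c Hc Hncd (eps / 2)) as [g [Gs Gt]]; [lra|].
  exists g. split; auto. assert (HT : Alg setT) by (apply alg_full; auto).
  assert (HD : is_ba Alg (D g)) by (apply dens_ba; auto).
  rewrite (tv_ext Alg _ (fun A => (fun A => 1 * nu A + -1 * nc A) A + (fun A => 1 * nc A + -1 * D g A) A))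
    by (intros; cbv beta; ring).
  eapply Rle_trans. { apply tv_triang; auto; apply ba_lin; auto. }
  rewrite <- (tv_ext Alg (fun A => nu A - nc A) (fun A => 1 * nu A + -1 * nc A)) by (intros; cbv beta; ring).
  rewrite <- (tv_ext Alg (fun A => nc A - D g A) (fun A => 1 * nc A + -1 * D g A)) by (intros; cbv beta; ring).
  lra. Qed.

(* Split mu into its positive and negative parts (|mu| +- mu)/2. *)
Lemma RN_gen eps : 0 < eps -> exists g, is_simple Alg g /\ tv Alg (fun A => mu A - D g A) setT <= eps.
Proof. intros He. assert (HT : Alg setT) by (apply alg_full; auto).
  assert (Htv := tv_ba Alg HAlg mu Hmu).
  set (mp := fun A => / 2 * tv Alg mu A + / 2 * mu A). set (mn := fun A => / 2 * tv Alg mu A + - / 2 * mu A).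
  assert (Hmp : is_ba Alg mp) by (apply ba_lin; auto). assert (Hmn : is_ba Alg mn) by (apply ba_lin; auto).
  assert (Ab : forall A, Alg A -> Rabs (mu A) <= tv Alg mu A) by (intros; apply tv_abs; auto).
  destruct (RN_pos mp Hmp) with (eps := eps / 2) as [g1 [G1s G1]].
  intros A HA; specialize (Ab A HA); apply Rabs_le_inv in Ab; unfold mp; lra.
  intros A HA; specialize (Ab A HA); apply Rabs_le_inv in Ab; unfold mp; lra. lra.
  destruct (RN_pos mn Hmn) with (eps := eps / 2) as [g2 [G2s G2]].
  intros A HA; specialize (Ab A HA); apply Rabs_le_inv in Ab; unfold mn; lra.
  intros A HA; specialize (Ab A HA); apply Rabs_le_inv in Ab; unfold mn; lra. lra.
  exists (fun w => 1 * g1 w + -1 * g2 w). split. apply simp_lin; auto.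
  assert (B1 : is_ba Alg (fun A => 1 * mp A + -1 * D g1 A)) by (apply ba_lin; auto; apply dens_ba; auto).
  assert (B2 : is_ba Alg (fun A => 1 * mn A + -1 * D g2 A)) by (apply ba_lin; auto; apply dens_ba; auto).
  rewrite (tv_ext Alg _ (fun A => (fun A => 1 * mp A + -1 * D g1 A) A + -1 * (fun A => 1 * mn A + -1 * D g2 A) A)).
  2: { intros A HA. rewrite dens_lin; auto. unfold mp, mn. cbv beta. lra. }
  eapply Rle_trans. apply tv_triang; auto. apply (ba_scal Alg (fun A => 1 * mn A + -1 * D g2 A) (-1)); auto.
  rewrite <- (tv_ext Alg (fun A => mp A - D g1 A) (fun A => 1 * mp A + -1 * D g1 A)) by (intros; cbv beta; ring).
  rewrite (tv_ext_abs Alg (fun X => -1 * (1 * mn X + -1 * D g2 X)) (fun A => mn A - D g2 A)). lra.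
  intros X HX. cbv beta. replace (-1 * (1 * mn X + -1 * D g2 X)) with (- (mn X - D g2 X)) by ring.
  apply Rabs_Ropp. Qed.
End AbsCont.

Section LIMs.
Context {D : Type} (le : D -> D -> Prop) (LIM : (D -> R) -> R) (HLIM : is_banach_limit le LIM).

Lemma LIM_ext (x y : D -> R) : (forall a, x a = y a) -> LIM x = LIM y.
Proof. intros H. f_equal. apply functional_extensionality; auto. Qed.
Lemma LIM_lin (x y : D -> R) c d : bounded_net x -> bounded_net y -> LIM (fun a => c * x a + d * y a) = c * LIM x + d * LIM y.
Proof. intros Hx Hy. rewrite (blim_add _ _ HLIM (fun a => c * x a) (fun a => d * y a)).
  rewrite !(blim_scal _ _ HLIM); auto.
  destruct Hx as [M H]; exists (Rabs c * M); intro a; rewrite Rabs_mult; apply Rmult_le_compat_l; auto; apply Rabs_pos.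
  destruct Hy as [M H]; exists (Rabs d * M); intro a; rewrite Rabs_mult; apply Rmult_le_compat_l; auto; apply Rabs_pos. Qed.
Lemma LIM_close (x y : D -> R) K : bounded_net x -> bounded_net y -> (forall a, Rabs (x a - y a) <= K) -> Rabs (LIM x - LIM y) <= K.
Proof. intros Hx Hy H. replace (LIM x - LIM y) with (1 * LIM x + -1 * LIM y) by ring. rewrite <- LIM_lin; auto.
  apply (blim_norm _ _ HLIM). intro a. replace (1 * x a + -1 * y a) with (x a - y a) by ring. auto. Qed.
Lemma LIM_0 : LIM (fun _ => 0) = 0.
Proof. assert (Hb : bounded_net (fun _ : D => 0)) by (exists 0; intros; rewrite Rabs_R0; lra).
  rewrite (LIM_ext _ (fun a => 0 * (fun _ => 0) a)) by (intros; ring). rewrite (blim_scal _ _ HLIM); auto. ring. Qed.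
Lemma LIM_sumR {X} (F : X -> D -> R) (l : list X) : (forall x, In x l -> bounded_net (F x)) ->
  LIM (fun a => sumR (map (fun x => F x a) l)) = sumR (map (fun x => LIM (F x)) l).
Proof. induction l as [|x l IH]; simpl; intros H. apply LIM_0.
  rewrite (LIM_ext _ (fun a => 1 * F x a + 1 * sumR (map (fun x => F x a) l))) by (intros; ring).
  rewrite LIM_lin, IH; auto. ring.
  assert (G : forall l', (forall x, In x l' -> bounded_net (F x)) -> bounded_net (fun a => sumR (map (fun x => F x a) l'))).
  { clear. induction l' as [|y l' IH']; simpl; intros H. exists 0; intros; rewrite Rabs_R0; lra.
    destruct (H y (or_introl eq_refl)) as [M1 H1]. destruct (IH' (fun z h => H z (or_intror h))) as [M2 H2].
    exists (M1 + M2). intro a. eapply Rle_trans. apply Rabs_triang. apply Rplus_le_compat; auto. }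
  apply G; auto. Qed.

Lemma LIM_cofinal (y : D -> R) (a : nat -> D) K : 0 <= K -> bounded_net y ->
  (forall n m, (n <= m)%nat -> le (a n) (a m)) ->
  (forall b n, le (a n) b -> Rabs (y b - y (a n)) <= K * / INR (S n)) ->
  Un_cv (fun n => y (a n)) (LIM y).
Proof. intros K0 Hy Ha Hgap.
  assert (Small : forall eps, 0 < eps -> exists N, forall n, (N <= n)%nat -> K * / INR (S n) <= eps / 2).
  { intros eps He. destruct (inv_small (eps / (2 * (K + 1)))) as [N HN]; [apply Rdiv_lt_0_compat; lra|].
    exists N. intros n Hn. specialize (HN n Hn).
    apply Rle_trans with (K * (eps / (2 * (K + 1)))); [apply Rmult_le_compat_l; lra|].
    apply (Rmult_le_reg_r (2 * (K + 1))); [lra|]. unfold Rdiv. field_simplify; try lra; nra. }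
  assert (Cy : Cauchy_crit (fun n => y (a n))).
  { intros eps He. destruct (Small (eps / 2)) as [N HN]; [lra|]. exists N. intros n m Hn Hm. unfold Rdist.
    assert (E1 := Hgap (a n) N (Ha N n Hn)). assert (E2 := Hgap (a m) N (Ha N m Hm)).
    specialize (HN N (le_n N)). apply Rabs_le_inv in E1, E2. apply Rabs_def1; lra. }
  destruct (R_complete _ Cy) as [L HL].
  enough (LIM y = L) as -> by exact HL.
  apply (blim_lim _ _ HLIM); auto. intros eps He.
  destruct (Small eps He) as [N1 HN1]. destruct (HL (eps / 2)) as [N2 HN2]; [lra|].
  exists (a (N1 + N2)%nat). intros b Hb. assert (E1 := Hgap b (N1 + N2)%nat Hb).
  specialize (HN2 (N1 + N2)%nat ltac:(lia)). specialize (HN1 (N1 + N2)%nat ltac:(lia)). unfold Rdist in HN2.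
  apply Rabs_le_inv in E1. apply Rabs_def2 in HN2. apply Rabs_def1; lra. Qed.
End LIMs.

Definition tests_converge {Om D : Type} (Alg : (Om -> bool) -> Prop) (rho : (Om -> bool) -> R)
  (LIM : (D -> R) -> R) (f : nat -> Om -> R) (h : D -> Om -> R) : Prop :=
  forall k, is_simple Alg k ->
    Un_cv (fun n => integ Alg rho (fun w => k w * f n w)) (LIM (fun a => integ Alg rho (fun w => k w * h a w))).

Section Transfer.
Context {Om : Type} (Alg : (Om -> bool) -> Prop) (HAlg : is_algebra Alg)
  (rho : (Om -> bool) -> R) (Hrho : is_ba Alg rho) (Hpos : forall A, Alg A -> 0 <= rho A)
  (mu : (Om -> bool) -> R) (Hmu : is_ba Alg mu)
  (Hac : forall eps, 0 < eps -> exists delta, 0 < delta /\ forall A, Alg A -> rho A < delta -> tv Alg mu A < eps).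
Context {Dd : Type} (le : Dd -> Dd -> Prop) (LIM : (Dd -> R) -> R) (HLIM : is_banach_limit le LIM).

Lemma markov_set d eta : is_simple Alg d -> 0 < eta -> exists E, Alg E /\
  eta * rho E <= integ Alg rho (fun w => Rabs (d w)) /\ (forall w, E w = false -> Rabs (d w) <= eta).
Proof. intros [r [Hr Er]] Heta.
  destruct (level_set Alg HAlg r (fun x => if Rlt_dec eta (Rabs x) then true else false) Hr) as [E [HE EE]].
  assert (Sd : is_simple Alg d) by (exists r; auto).
  exists E. split; [auto|split].
  - rewrite <- (integ_indic Alg HAlg rho Hrho); auto. apply (I_mono Alg HAlg rho Hrho Hpos).
    + eapply simp_ext; [|apply (simp_lin Alg (indic E) (indic E) eta 0)]; [intro; simpl; ring|apply simp_indic; auto..].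
    + apply (simp_fun Alg HAlg d Rabs); auto.
    + intro w. unfold indic. rewrite EE, <- Er. assert (G0 := Rabs_pos (d w)).
      destruct (Rlt_dec eta (Rabs (d w))); simpl; lra.
  - intros w Hw. rewrite EE, <- Er in Hw. destruct (Rlt_dec eta (Rabs (d w))); [discriminate|lra]. Qed.

(* A bounded simple sequence Cauchy in L^1(rho) is Cauchy in L^1(|mu|):
   off the Markov set of f_{n+p} - f_{n+q} the difference is below eta, and
   on it (a rho-small, hence |mu|-small set) it is at most 2K. *)
Lemma L1_transfer (f : nat -> Om -> R) K : (forall n, is_simple Alg (f n)) -> (forall n w, Rabs (f n w) <= K) ->
  L1_cauchy_for Alg rho f -> L1_cauchy Alg mu f.
Proof. intros Hs HK Hc eps He. set (nu := tv Alg mu).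
  assert (Hnu : is_ba Alg nu) by (apply tv_ba; auto).
  assert (Hnp : forall A, Alg A -> 0 <= nu A) by (intros; apply tv_nonneg; auto).
  assert (N0 : 0 <= nu setT) by (apply Hnp, alg_full; auto).
  set (Kp := Rabs K). assert (K0 : 0 <= Kp) by apply Rabs_pos.
  set (eta := eps / (2 * (nu setT + 1))). assert (Heta : 0 < eta) by (apply Rdiv_lt_0_compat; lra).
  destruct (Hac (eps / (2 * (2 * Kp + 1)))) as [dl [Hdl Hd]]; [apply Rdiv_lt_0_compat; lra|].
  destruct (Hc (eta * dl / 2)) as [N HN]; [assert (0 < eta * dl) by nra; lra|].
  exists N. intros n Hn p q. specialize (HN n Hn p q).
  set (d := fun w => f (n + p)%nat w - f (n + q)%nat w).
  change (integ Alg rho (fun w => Rabs (d w)) <= eta * dl / 2) in HN.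
  assert (Sd : is_simple Alg d) by (apply simp_sub; auto).
  destruct (markov_set d eta Sd Heta) as [E [HE [HmE Hout]]].
  assert (HrE : rho E < dl).
  { assert (Hq : eta * rho E < eta * dl) by nra. apply Rmult_lt_reg_l in Hq; auto. }
  assert (HnuE := Hd E HE HrE). fold nu in HnuE.
  assert (Hin : forall w, Rabs (d w) <= 2 * Kp).
  { intro w. unfold d, Rminus. eapply Rle_trans; [apply Rabs_triang|]. rewrite Rabs_Ropp.
    assert (G1 := Rle_trans _ _ _ (HK (n + p)%nat w) (Rle_abs K)).
    assert (G2 := Rle_trans _ _ _ (HK (n + q)%nat w) (Rle_abs K)). fold Kp in G1, G2. lra. }
  assert (SE : is_simple Alg (fun w => 2 * Kp * indic E w))
    by (eapply simp_ext; [|apply (simp_lin Alg (indic E) (indic E) (2 * Kp) 0)]; [intro; simpl; ring|apply simp_indic; auto..]).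
  assert (I1 : integ Alg nu (fun w => Rabs (d w)) <=
               integ Alg nu (fun w => 1 * (fun w => 2 * Kp * indic E w) w + eta * (fun _ => 1) w)).
  { apply (I_mono Alg HAlg nu Hnu Hnp).
    - apply (simp_fun Alg HAlg d Rabs); auto.
    - apply simp_lin; auto. apply (simp_const Alg HAlg).
    - intro w. unfold indic. destruct (E w) eqn:Ew; [specialize (Hin w)|specialize (Hout w Ew)]; lra. }
  cbv beta in I1. rewrite (I_lin Alg HAlg nu Hnu _ _ 1 eta SE (simp_const Alg HAlg 1)) in I1.
  rewrite (integ_indic Alg HAlg nu Hnu) in I1 by auto. rewrite (I_const Alg HAlg nu Hnu) in I1.
  eapply Rle_trans; [exact I1|].
  assert (2 * Kp * nu E <= 2 * Kp * (eps / (2 * (2 * Kp + 1)))) by (apply Rmult_le_compat_l; lra).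
  assert (2 * Kp * (eps / (2 * (2 * Kp + 1))) <= eps / 2) by (apply scaled_half_le; lra).
  assert (nu setT * eta <= eps / 2) by (apply scaled_half_le; lra).
  lra. Qed.

Lemma measure_close (g : Om -> R) k K : is_simple Alg g -> is_B Alg k -> (forall w, Rabs (k w) <= K) ->
  Rabs (integ Alg mu k - integ Alg (dens Alg rho g) k) <= K * tv Alg (fun A => mu A - dens Alg rho g A) setT.
Proof. intros Hg Hk HK. assert (HD := dens_ba Alg HAlg rho Hrho g Hg).
  replace (integ Alg mu k - integ Alg (dens Alg rho g) k) with (1 * integ Alg mu k + -1 * integ Alg (dens Alg rho g) k) by ring.
  rewrite <- integ_lin_mu; auto.
  rewrite (tv_ext Alg _ (fun A => 1 * mu A + -1 * dens Alg rho g A)) by (intros; cbv beta; ring).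
  apply (integ_bound Alg HAlg); auto. apply ba_lin; auto. Qed.

(* Tested convergence against rho gives convergence of mu(f_n 1_A): replace
   mu by a density measure g rho, i.e. test against g 1_A. *)
Lemma conv_transfer (f : nat -> Om -> R) (h : Dd -> Om -> R) K A :
  (forall n, is_B Alg (f n)) -> (forall n w, Rabs (f n w) <= K) ->
  (forall a, is_B Alg (h a)) -> (forall a w, Rabs (h a w) <= K) -> Alg A ->
  tests_converge Alg rho LIM f h ->
  Un_cv (fun n => integ Alg mu (fun w => f n w * indic A w)) (LIM (fun a => integ Alg mu (fun w => h a w * indic A w))).
Proof. intros Hf HfK Hh HhK HA Hg eps He.
  set (Kp := Rabs K + 1). assert (0 <= Rabs K) by apply Rabs_pos. assert (Kp0 : 0 < Kp) by (unfold Kp; lra).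
  assert (HfK' : forall n w, Rabs (f n w * indic A w) <= Rabs K)
    by (intros; apply indic_bound; intro; eapply Rle_trans; [apply HfK|apply Rle_abs]).
  assert (HhK' : forall a w, Rabs (h a w * indic A w) <= Rabs K)
    by (intros; apply indic_bound; intro; eapply Rle_trans; [apply HhK|apply Rle_abs]).
  destruct (RN_gen Alg HAlg rho Hrho Hpos mu Hmu Hac (eps / (4 * Kp))) as [g [Gs Gt]]; [apply Rdiv_lt_0_compat; lra|].
  set (tau := tv Alg (fun A => mu A - dens Alg rho g A) setT) in *.
  assert (HD := dens_ba Alg HAlg rho Hrho g Gs).
  assert (tau0 : 0 <= tau).
  { unfold tau. rewrite (tv_ext Alg _ (fun A => 1 * mu A + -1 * dens Alg rho g A)) by (intros; cbv beta; ring).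
    apply tv_nonneg; auto. apply ba_lin; auto. apply alg_full; auto. }
  assert (Eg : forall k, is_B Alg k -> integ Alg (dens Alg rho g) (fun w => k w * indic A w) =
                                       integ Alg rho (fun w => (g w * indic A w) * k w)).
  { intros k Hk. rewrite (dens_integ Alg HAlg rho Hrho g _ Gs) by (apply B_mul_indic; auto).
    apply I_ext. intro w. ring. }
  assert (Hk : is_simple Alg (fun w => g w * indic A w)) by (apply (simp_mul Alg HAlg); auto; apply simp_indic; auto).
  destruct (Hg _ Hk (eps / 4)) as [N HN]; [lra|].
  exists N. intros n Hn. specialize (HN n Hn). unfold Rdist in *.
  assert (C1 := measure_close g _ _ Gs (B_mul_indic Alg HAlg _ A (Hf n) HA) (HfK' n)).
  rewrite Eg in C1 by auto. fold tau in C1.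
  assert (C2 : Rabs (LIM (fun a => integ Alg mu (fun w => h a w * indic A w)) -
                     LIM (fun a => integ Alg rho (fun w => (g w * indic A w) * h a w))) <= Rabs K * tau).
  { apply (LIM_close le LIM HLIM).
    - exists (Rabs K * total_var Alg mu). intro a. apply (integ_bound Alg HAlg); auto. apply B_mul_indic; auto.
    - exists (Rabs K * total_var Alg (dens Alg rho g)). intro a. rewrite <- Eg by auto.
      apply (integ_bound Alg HAlg); auto. apply B_mul_indic; auto.
    - intro a. rewrite <- Eg by auto. apply measure_close; auto. apply B_mul_indic; auto. }
  assert (Rabs K * tau <= Kp * (eps / (4 * Kp))) by (apply Rmult_le_compat; unfold Kp in *; lra).
  assert (Kp * (eps / (4 * Kp)) = eps / 4) by (field; lra).
  apply Rabs_le_inv in C1. apply Rabs_le_inv in C2. apply Rabs_def2 in HN. apply Rabs_def1; lra. Qed.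

Lemma transfer_sequence (f : nat -> Om -> R) (h : Dd -> Om -> R) Kf Kh :
  (forall n, is_simple Alg (f n)) -> (forall n w, Rabs (f n w) <= Kf) ->
  (forall a, is_B Alg (h a)) -> (forall a w, Rabs (h a w) <= Kh) ->
  L1_cauchy_for Alg rho f -> tests_converge Alg rho LIM f h ->
  L1_cauchy Alg mu f /\ forall A, Alg A ->
    Un_cv (fun n => integ Alg mu (fun w => f n w * indic A w)) (LIM (fun a => integ Alg mu (fun w => h a w * indic A w))).
Proof. intros Hs HfK Hh HhK Hc Ht. split; [apply (L1_transfer f Kf); auto|].
  intros A HA. apply (conv_transfer f h (Rabs Kf + Rabs Kh) A); auto.
  - intro n; apply simp_B; auto.
  - intros n w. assert (Rabs Kh >= 0) by apply Rle_ge, Rabs_pos.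
    eapply Rle_trans; [apply HfK|]. assert (G := Rle_abs Kf). lra.
  - intros a w. assert (Rabs Kf >= 0) by apply Rle_ge, Rabs_pos.
    eapply Rle_trans; [apply HhK|]. assert (G := Rle_abs Kh). lra. Qed.
End Transfer.

(* General net.  xi(B) = LIM_a rho(h_a 1_B) is additive with |xi| <= K rho, so
   [RN_bounded_seq] applies; rho-integrals of simple functions against the
   densities are elementary integrals against g_n rho, which converge to the
   same elementary integrals against xi. *)
Section General.
Context {Om : Type} (Alg : (Om -> bool) -> Prop) (HAlg : is_algebra Alg)
  (rho : (Om -> bool) -> R) (Hrho : is_ba Alg rho) (Hpos : forall A, Alg A -> 0 <= rho A).
Context {Dd : Type} (le : Dd -> Dd -> Prop) (LIM : (Dd -> R) -> R) (HLIM : is_banach_limit le LIM).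
Context (h : Dd -> Om -> R) (HhB : forall a, is_B Alg (h a)) (Kh : R) (HK0 : 0 <= Kh) (HhK : forall a w, Rabs (h a w) <= Kh).

Notation I := (integ Alg rho).

Lemma rep_int_integ k r : is_B Alg k -> rep_ok Alg r ->
  rep_int (fun X => I (fun w => k w * indic X w)) r = I (fun w => k w * rep_eval r w).
Proof. intros Hk. induction r as [|[c A] r IH]; intros Hr; inversion Hr; subst; simpl in *.
  - unfold rep_int, rep_eval; simpl. rewrite (I_ext Alg rho _ (fun w => 0 * (fun _ => 0) w + 0 * (fun _ => 0) w)) by (intro; ring).
    rewrite (integ_lin Alg HAlg rho Hrho); try apply simp_B, (simp_const Alg HAlg). ring.
  - assert (E : rep_int (fun X => I (fun w => k w * indic X w)) ((c, A) :: r) = c * I (fun w => k w * indic A w) + rep_int (fun X => I (fun w => k w * indic X w)) r) by reflexivity.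
    rewrite E, IH; auto. rewrite <- (Rmult_1_l (I (fun w => k w * rep_eval r w))).
    rewrite <- (integ_lin Alg HAlg rho Hrho). apply I_ext. intro w. unfold rep_eval; simpl. ring.
    apply B_mul_indic; auto. apply B_mul_rep; auto. Qed.
Definition lim_measure B := LIM (fun a => I (fun w => h a w * indic B w)).
Lemma h_net_dom B : Alg B -> forall a, Rabs (I (fun w => h a w * indic B w)) <= Kh * rho B.
Proof. intros HB a. assert (Hb := B_mul_indic Alg HAlg (h a) B (HhB a) HB).
  assert (Si : is_B Alg (fun w => Kh * indic B w)) by (apply simp_B; eapply simp_ext; [|apply (simp_lin Alg (indic B) (indic B) Kh 0)]; [intro; simpl; ring|apply simp_indic; auto|apply simp_indic; auto]).
  assert (Si' : is_B Alg (fun w => - Kh * indic B w)) by (apply simp_B; eapply simp_ext; [|apply (simp_lin Alg (indic B) (indic B) (- Kh) 0)]; [intro; simpl; ring|apply simp_indic; auto|apply simp_indic; auto]).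
  apply Rabs_le. split.
  - replace (- (Kh * rho B)) with (- Kh * rho B) by ring. rewrite <- (integ_indic Alg HAlg rho Hrho) by auto.
    apply integ_mono; auto. intro w. assert (G := Rabs_le_inv _ _ (HhK a w)). unfold indic; destruct (B w); lra.
  - rewrite <- (integ_indic Alg HAlg rho Hrho) by auto.
    apply integ_mono; auto. intro w. assert (G := Rabs_le_inv _ _ (HhK a w)). unfold indic; destruct (B w); lra. Qed.
Lemma h_net_bounded B : Alg B -> bounded_net (fun a => I (fun w => h a w * indic B w)).
Proof. intros HB. exists (Kh * rho B). apply h_net_dom; auto. Qed.
Lemma lim_measure_dom B : Alg B -> Rabs (lim_measure B) <= Kh * rho B.
Proof. intros HB. apply (blim_norm _ _ HLIM). apply h_net_dom; auto. Qed.
Lemma lim_measure_ba : is_ba Alg lim_measure.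
Proof. split.
  - intros A B HA HB Hd. unfold lim_measure. rewrite <- (blim_add _ _ HLIM); try apply h_net_bounded; auto.
    apply LIM_ext. intro a. rewrite <- (Rmult_1_l (I (fun w => h a w * indic A w))), <- (Rmult_1_l (I (fun w => h a w * indic B w))).
    rewrite <- (integ_lin Alg HAlg rho Hrho); try apply B_mul_indic; auto. apply I_ext. intro w.
    specialize (Hd w). unfold indic, setU. destruct (A w), (B w); simpl in *; try discriminate; ring.
  - exists (Kh * rho setT). intros A HA. eapply Rle_trans. apply lim_measure_dom; auto. apply Rmult_le_compat_l; auto.
    apply (pos_mono Alg HAlg rho Hrho Hpos); auto. Qed.
Lemma LIM_rep r : rep_ok Alg r -> LIM (fun a => rep_int (fun X => I (fun w => h a w * indic X w)) r) = rep_int lim_measure r.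
Proof. intros Hr. unfold rep_int. rewrite (LIM_sumR le LIM HLIM (fun p a => fst p * I (fun w => h a w * indic (snd p) w))).
  - apply sumR_map_ext. intros p Hp. rewrite (blim_scal _ _ HLIM). reflexivity. apply h_net_bounded.
    unfold rep_ok in Hr; rewrite Forall_forall in Hr; auto.
  - intros p Hp. destruct (h_net_bounded (snd p)) as [M HM]. unfold rep_ok in Hr; rewrite Forall_forall in Hr; auto.
    exists (Rabs (fst p) * M). intro a. rewrite Rabs_mult. apply Rmult_le_compat_l; auto. apply Rabs_pos. Qed.
Lemma general_seq : exists f : nat -> Om -> R, (forall n, is_simple Alg (f n)) /\ (forall n w, Rabs (f n w) <= Kh) /\
  L1_cauchy_for Alg rho f /\ tests_converge Alg rho LIM f h.
Proof. destruct (RN_bounded_seq Alg HAlg rho Hrho Hpos lim_measure lim_measure_ba Kh HK0 lim_measure_dom) as [g [Gs [Gb [GL Gt]]]].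
  exists g. split; [auto|split; [auto|split]]; [apply (L1_from_sq Alg HAlg rho Hrho Hpos g); auto|].
  intros k [r [Hr Er]].
  (* Both sides are elementary integrals of [r], against g_n rho and xi. *)
  assert (E1 : forall n, I (fun w => k w * g n w) = rep_int (dens Alg rho (g n)) r).
  { intro n. unfold dens. rewrite (rep_int_integ (g n) r); [|apply simp_B; auto|auto].
    apply I_ext. intro w. rewrite Er. ring. }
  assert (E2 : LIM (fun a => I (fun w => k w * h a w)) = rep_int lim_measure r).
  { rewrite <- LIM_rep; auto. apply LIM_ext. intro a. rewrite rep_int_integ; auto. apply I_ext. intro w.
    rewrite Er. ring. }
  rewrite E2. intros eps He. assert (T0 : 0 <= rho setT) by (apply Hpos, alg_full; auto).
  set (K := rep_norm r + 1). assert (K0 : 0 < K) by (unfold K; assert (G := rep_norm_nonneg r); lra).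
  destruct (sqrt_small (rho setT) (eps / (2 * K)) T0) as [N HN]. apply Rdiv_lt_0_compat; lra.
  exists N. intros n Hn. unfold Rdist. rewrite E1.
  assert (HD := dens_ba Alg HAlg rho Hrho (g n) (Gs n)).
  assert (Hba : is_ba Alg (fun X => 1 * lim_measure X + -1 * dens Alg rho (g n) X)) by (apply ba_lin; auto; apply lim_measure_ba).
  assert (B1 := rep_bound Alg HAlg _ Hba r (rep_norm r) Hr (rep_eval_norm r)).
  rewrite rep_int_lin in B1. unfold total_var in B1.
  rewrite (tv_ext Alg _ (fun A => lim_measure A - dens Alg rho (g n) A)) in B1 by (intros; cbv beta; ring).
  specialize (Gt n). specialize (HN n Hn).
  assert (tv Alg (fun A => lim_measure A - dens Alg rho (g n) A) setT <= eps / (2 * K)) by lra.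
  assert (0 <= rep_norm r) by apply rep_norm_nonneg.
  assert (rep_norm r * tv Alg (fun A => lim_measure A - dens Alg rho (g n) A) setT <= K * (eps / (2 * K))).
  { assert (0 <= tv Alg (fun A => lim_measure A - dens Alg rho (g n) A) setT).
    { rewrite (tv_ext Alg _ (fun A => 1 * lim_measure A + -1 * dens Alg rho (g n) A)) by (intros; cbv beta; ring).
      apply tv_nonneg; auto. apply alg_full; auto. }
    apply Rmult_le_compat; auto. unfold K; lra. }
  assert (K * (eps / (2 * K)) = eps / 2) by (field; lra).
  rewrite Rabs_minus_sym. apply Rabs_le_inv in B1. apply Rabs_def1; lra. Qed.
End General.

(* Choose a_n increasing, cofinal with indices b_n at which
   rho(h_b) is within 1/(n+1) of its supremum; monotonicity makes
   rho(h_b - h_{a_n}) <= 1/(n+1) for all b beyond a_n.  The sequence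
   f_n = s_n - 3 * 2^-n, with s_n a 2^-n-uniform approximation of h_{a_n},
   is increasing. *)
Section Incr.
Context {Om : Type} (Alg : (Om -> bool) -> Prop) (HAlg : is_algebra Alg)
  (rho : (Om -> bool) -> R) (Hrho : is_ba Alg rho) (Hpos : forall A, Alg A -> 0 <= rho A).
Context {Dd : Type} (le : Dd -> Dd -> Prop) (Hdir : is_directed le) (LIM : (Dd -> R) -> R) (HLIM : is_banach_limit le LIM).
Context (h : Dd -> Om -> R) (HhB : forall a, is_B Alg (h a)) (Kh : R) (HhK : forall a w, Rabs (h a w) <= Kh)
  (Hinc : forall a b, le a b -> forall w, h a w <= h b w).

Notation I := (integ Alg rho).

Lemma total_var_pos : total_var Alg rho = rho setT.
Proof. unfold total_var. apply tv_pos_eq; auto. apply alg_full; auto. Qed.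
Definition h_integrals := fun s => exists a, s = I (h a).
Definition sup_h_int := Rsup h_integrals.
Lemma sup_h_int_lub : is_lub h_integrals sup_h_int.
Proof. apply Rsup_lub. destruct (dir_inhabited _ Hdir) as [a]. exists (I (h a)); exists a; auto.
  exists (Kh * rho setT). intros x [a ->]. rewrite <- total_var_pos. assert (G := integ_bound Alg HAlg rho Hrho (h a) Kh (HhB a) (HhK a)).
  apply Rabs_le_inv in G. lra. Qed.
Lemma h_int_le_sup a : I (h a) <= sup_h_int.
Proof. apply sup_h_int_lub. exists a; auto. Qed.
Lemma near_sup_h_int n : exists b, sup_h_int - / INR (S n) < I (h b).
Proof. apply NNPP. intro H. assert (Hp : 0 < / INR (S n)) by (apply Rinv_0_lt_compat, lt_0_INR; lia).
  assert (sup_h_int <= sup_h_int - / INR (S n)); [|lra]. apply sup_h_int_lub. intros x [a ->].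
  destruct (Rle_dec (I (h a)) (sup_h_int - / INR (S n))) as [G|G]; auto. exfalso; apply H. exists a; lra. Qed.
Definition near_sup_index n := proj1_sig (constructive_indefinite_description _ (near_sup_h_int n)).
Lemma near_sup_index_spec n : sup_h_int - / INR (S n) < I (h (near_sup_index n)).
Proof. unfold near_sup_index. destruct constructive_indefinite_description; simpl; auto. Qed.
Fixpoint cofinal n : Dd := match n with
  | O => near_sup_index O
  | S k => proj1_sig (constructive_indefinite_description _ (dir_up _ Hdir (cofinal k) (near_sup_index (S k)))) end.
Lemma cofinal_step n : le (cofinal n) (cofinal (S n)) /\ le (near_sup_index (S n)) (cofinal (S n)).
Proof. simpl. destruct constructive_indefinite_description; simpl; auto. Qed.
Lemma cofinal_mono n m : (n <= m)%nat -> le (cofinal n) (cofinal m).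
Proof. induction 1. apply dir_refl; auto. eapply dir_trans; eauto. apply cofinal_step. Qed.
Lemma h_int_mono a b : le a b -> I (h a) <= I (h b).
Proof. intros H. apply integ_mono; auto. Qed.
Lemma cofinal_near n : sup_h_int - / INR (S n) < I (h (cofinal n)).
Proof. destruct n. apply near_sup_index_spec. eapply Rlt_le_trans. apply near_sup_index_spec. apply h_int_mono, cofinal_step. Qed.
Lemma h_int_gap a n : le (cofinal n) a -> 0 <= I (h a) - I (h (cofinal n)) <= / INR (S n).
Proof. intros H. assert (G1 := h_int_mono _ _ H). assert (G2 := h_int_le_sup a). assert (G3 := cofinal_near n). lra. Qed.
Lemma simple_approx_exists n : exists s, is_simple Alg s /\ forall w, Rabs (h (cofinal n) w - s w) <= (/ 2) ^ n.
Proof. destruct (B_approx Alg (h (cofinal n)) ((/ 2) ^ n) (HhB _) (half_pow_pos n)) as [r [Hr E]].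
  exists (rep_eval r). split; auto. exists r; auto. Qed.
Definition simple_approx n := proj1_sig (constructive_indefinite_description _ (simple_approx_exists n)).
Lemma simple_approx_spec n : is_simple Alg (simple_approx n) /\ forall w, Rabs (h (cofinal n) w - simple_approx n w) <= (/ 2) ^ n.
Proof. unfold simple_approx. destruct constructive_indefinite_description; simpl; auto. Qed.
Definition incr_seq n w := simple_approx n w - 3 * (/ 2) ^ n.
Lemma incr_seq_simple n : is_simple Alg (incr_seq n).
Proof. unfold incr_seq. apply simp_sub. apply simple_approx_spec. apply (simp_const Alg HAlg). Qed.
Lemma incr_seq_close n w : Rabs (incr_seq n w - h (cofinal n) w) <= 4 * (/ 2) ^ n.
Proof. unfold incr_seq. destruct (simple_approx_spec n) as [_ G]. specialize (G w). apply Rabs_le_inv in G.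
  assert (P := half_pow_pos n). apply Rabs_le. lra. Qed.
Lemma incr_seq_bound n w : Rabs (incr_seq n w) <= Kh + 4.
Proof. assert (G := incr_seq_close n w). assert (G2 := HhK (cofinal n) w). assert ((/ 2) ^ n <= 1) by (apply half_pow_le1).
  apply Rabs_le_inv in G, G2. apply Rabs_le. lra. Qed.
(* f_n <= f_{n+1}: h_{a_n} <= h_{a_{n+1}}, and the shifts absorb the errors. *)
Lemma incr_seq_incr n w : incr_seq n w <= incr_seq (S n) w.
Proof. unfold incr_seq. destruct (simple_approx_spec n) as [_ G1]. destruct (simple_approx_spec (S n)) as [_ G2].
  specialize (G1 w); specialize (G2 w). apply Rabs_le_inv in G1, G2.
  assert (H := Hinc _ _ (proj1 (cofinal_step n)) w). replace ((/2)^(S n)) with (/2 * (/2)^n) in * by (simpl; ring). lra. Qed.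
(* |f_i - f_j| <= (h_{a_i} - h_{a_n}) + (h_{a_j} - h_{a_n}) + 8 * 2^-n for i, j >= n. *)
Lemma incr_seq_L1 : L1_cauchy_for Alg rho incr_seq.
Proof. intros eps He. assert (T0 : 0 <= rho setT) by (apply Hpos, alg_full; auto).
  destruct (inv_small (eps / (2 + 8 * rho setT + 1))) as [N HN]. apply Rdiv_lt_0_compat; lra.
  exists N. intros n Hn p q. set (i := (n + p)%nat). set (j := (n + q)%nat).
  assert (Hi := cofinal_mono n i ltac:(unfold i; lia)). assert (Hj := cofinal_mono n j ltac:(unfold j; lia)).
  assert (Bi := HhB (cofinal i)). assert (Bj := HhB (cofinal j)). assert (Bn := HhB (cofinal n)).
  set (e := (/ 2) ^ n). assert (He0 : 0 < e) by apply half_pow_pos.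
  assert (ei : (/ 2) ^ i <= e). { unfold e, i. rewrite pow_add. assert ((/ 2) ^ p <= 1) by (apply half_pow_le1).
    assert (0 < (/2) ^ n) by apply half_pow_pos. nra. }
  assert (ej : (/ 2) ^ j <= e). { unfold e, j. rewrite pow_add. assert ((/ 2) ^ q <= 1) by (apply half_pow_le1).
    assert (0 < (/2) ^ n) by apply half_pow_pos. nra. }
  assert (Bsum : is_B Alg (fun w => 1 * (fun w => 1 * h (cofinal i) w + 1 * h (cofinal j) w) w + 1 * (fun w => (-2) * h (cofinal n) w + (8 * e) * 1) w)).
  { apply B_lin; apply B_lin; auto. apply simp_B, (simp_const Alg HAlg). }
  assert (Bab : is_B Alg (fun w => Rabs (incr_seq i w - incr_seq j w))).
  { apply simp_B, (simp_fun Alg HAlg (fun w => incr_seq i w - incr_seq j w) Rabs). apply simp_sub; apply incr_seq_simple. }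
  eapply Rle_trans. apply (integ_mono Alg HAlg rho Hrho Hpos _ _ Bab Bsum).
  - intro w. assert (Ci := incr_seq_close i w). assert (Cj := incr_seq_close j w).
    assert (Mi := Hinc _ _ Hi w). assert (Mj := Hinc _ _ Hj w). apply Rabs_le_inv in Ci, Cj. apply Rabs_le. lra.
  - rewrite !(integ_lin Alg HAlg rho Hrho); auto; try apply B_lin; auto; try apply simp_B, (simp_const Alg HAlg).
    rewrite (integ_rep Alg HAlg rho Hrho (fun _ => 1) [(1, setT)]). 2: constructor; [apply alg_full; auto|constructor].
    2: intro; unfold rep_eval, indic, setT; simpl; ring.
    unfold rep_int; simpl. assert (Gi := h_int_gap _ _ Hi). assert (Gj := h_int_gap _ _ Hj).
    specialize (HN n Hn). assert (e <= / INR (S n)) by apply half_pow_le.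
    assert (8 * e * rho setT <= 8 * / INR (S n) * rho setT) by (apply Rmult_le_compat_r; lra).
    assert ((2 + 8 * rho setT) * / INR (S n) <= eps).
    { apply Rle_trans with ((2 + 8 * rho setT + 1) * (eps / (2 + 8 * rho setT + 1))).
      assert (0 < / INR (S n)) by (apply Rinv_0_lt_compat, lt_0_INR; lia).
      apply Rle_trans with ((2 + 8 * rho setT + 1) * / INR (S n)). nra. apply Rmult_le_compat_l; lra.
      right; field; lra. }
    nra. Qed.

Lemma test_gap k K : is_simple Alg k -> 0 <= K -> (forall w, Rabs (k w) <= K) -> forall b n, le (cofinal n) b ->
  Rabs (I (fun w => k w * h b w) - I (fun w => k w * h (cofinal n) w)) <= K * / INR (S n).
Proof. intros Hk K0 HK b n Hle. assert (G := h_int_gap b n Hle). set (a := cofinal n) in *.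
  assert (HkB : forall c, is_B Alg (fun w => k w * h c w)).
  { intro c. destruct Hk as [r [Hr Er]]. replace (fun w => k w * h c w) with (fun w => h c w * rep_eval r w).
    apply B_mul_rep; auto. apply functional_extensionality; intro w; rewrite <- Er; ring. }
  replace (I (fun w => k w * h b w) - I (fun w => k w * h a w))
    with (1 * I (fun w => k w * h b w) + -1 * I (fun w => k w * h a w)) by ring.
  rewrite <- (integ_lin Alg HAlg rho Hrho); auto.
  assert (Bl : is_B Alg (fun w => 1 * (k w * h b w) + -1 * (k w * h a w))) by (apply B_lin; auto).
  assert (Bd : is_B Alg (fun w => K * h b w + - K * h a w)) by (apply B_lin; auto).
  assert (Bd' : is_B Alg (fun w => - K * h b w + K * h a w)) by (apply B_lin; auto).
  assert (Ed : I (fun w => K * h b w + - K * h a w) = K * (I (h b) - I (h a)))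
    by (rewrite (integ_lin Alg HAlg rho Hrho); auto; ring).
  assert (Ed' : I (fun w => - K * h b w + K * h a w) = - (K * (I (h b) - I (h a))))
    by (rewrite (integ_lin Alg HAlg rho Hrho); auto; ring).
  assert (P1 : forall w, Rabs (1 * (k w * h b w) + -1 * (k w * h a w)) <= K * (h b w - h a w)).
  { intro w. replace (1 * (k w * h b w) + -1 * (k w * h a w)) with (k w * (h b w - h a w)) by ring.
    rewrite Rabs_mult. assert (M := Hinc _ _ Hle w). rewrite (Rabs_right (h b w - h a w)) by lra.
    apply Rmult_le_compat_r; auto. lra. }
  assert (K * (I (h b) - I (h a)) <= K * / INR (S n)) by (apply Rmult_le_compat_l; lra).
  apply Rabs_le. split.
  - eapply Rle_trans; [|apply (integ_mono Alg HAlg rho Hrho Hpos _ _ Bd' Bl)]; [lra|].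
    intro w. specialize (P1 w). apply Rabs_le_inv in P1. lra.
  - eapply Rle_trans; [apply (integ_mono Alg HAlg rho Hrho Hpos _ _ Bl Bd)|lra].
    intro w. specialize (P1 w). apply Rabs_le_inv in P1. lra. Qed.

(* Along a_n the net of tests is uniformly Cauchy, so [LIM_cofinal]
   identifies its Banach limit; f_n is within 4 * 2^-n of h_{a_n}. *)
Lemma incr_conv : tests_converge Alg rho LIM incr_seq h.
Proof. intros k Hk. assert (T0 : 0 <= rho setT) by (apply Hpos, alg_full; auto).
  destruct (simple_bounded Alg _ Hk) as [K [K0 HK]].
  set (y := fun a => I (fun w => k w * h a w)).
  assert (Hyb : bounded_net y).
  { exists (K * Kh * rho setT). intro a. unfold y. rewrite <- total_var_pos.
    apply (integ_bound Alg HAlg rho Hrho).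
    - destruct Hk as [r [Hr Er]]. replace (fun w => k w * h a w) with (fun w => h a w * rep_eval r w).
      apply B_mul_rep; auto. apply functional_extensionality; intro w; rewrite <- Er; ring.
    - intro w. rewrite Rabs_mult. apply Rmult_le_compat; try apply Rabs_pos; auto. }
  assert (Hy := LIM_cofinal le LIM HLIM y cofinal K K0 Hyb cofinal_mono (test_gap k K Hk K0 HK)).
  assert (Close : forall n, Rabs (I (fun w => k w * incr_seq n w) - y (cofinal n)) <= 4 * K * rho setT * / INR (S n)).
  { intro n. unfold y. rewrite <- total_var_pos.
    assert (Hks : forall s, is_simple Alg s -> is_simple Alg (fun w => k w * s w)) by (intros; apply (simp_mul Alg HAlg); auto).
    replace (I (fun w => k w * incr_seq n w) - I (fun w => k w * h (cofinal n) w))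
      with (1 * I (fun w => k w * incr_seq n w) + -1 * I (fun w => k w * h (cofinal n) w)) by ring.
    assert (total_var Alg rho >= 0) by (apply Rle_ge, total_var_nonneg; auto).
    assert ((/ 2) ^ n <= / INR (S n)) by apply half_pow_le.
    apply Rle_trans with ((K * (4 * (/ 2) ^ n)) * total_var Alg rho).
    - rewrite <- (integ_lin Alg HAlg rho Hrho); [apply (integ_bound Alg HAlg rho Hrho)|..].
      + apply B_lin; [apply simp_B, Hks, incr_seq_simple|].
        destruct Hk as [r [Hr Er]]. replace (fun w => k w * h (cofinal n) w) with (fun w => h (cofinal n) w * rep_eval r w).
        apply B_mul_rep; auto. apply functional_extensionality; intro w; rewrite <- Er; ring.
      + intro w. replace (1 * (k w * incr_seq n w) + -1 * (k w * h (cofinal n) w)) with (k w * (incr_seq n w - h (cofinal n) w)) by ring.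
        rewrite Rabs_mult. apply Rmult_le_compat; try apply Rabs_pos; auto. apply incr_seq_close.
      + apply simp_B, Hks, incr_seq_simple.
      + destruct Hk as [r [Hr Er]]. replace (fun w => k w * h (cofinal n) w) with (fun w => h (cofinal n) w * rep_eval r w).
        apply B_mul_rep; auto. apply functional_extensionality; intro w; rewrite <- Er; ring.
    - replace (K * (4 * (/ 2) ^ n) * total_var Alg rho) with ((4 * K * total_var Alg rho) * (/ 2) ^ n) by ring.
      apply Rmult_le_compat_l; nra. }
  intros eps He. destruct (Hy (eps / 2)) as [N2 HN2]; [lra|].
  set (c := 4 * K * rho setT). assert (c0 : 0 <= c) by (unfold c; nra).
  destruct (inv_small (eps / (2 * (c + 1)))) as [N1 HN1]; [apply Rdiv_lt_0_compat; lra|].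
  exists (N1 + N2)%nat. intros n Hn. unfold Rdist in *. specialize (HN2 n ltac:(lia)). specialize (HN1 n ltac:(lia)).
  assert (Cl := Close n). fold c in Cl.
  assert (c * / INR (S n) <= eps / 2).
  { eapply Rle_trans; [apply Rmult_le_compat_l; [lra|exact HN1]|]. apply scaled_half_le; lra. }
  apply Rabs_le_inv in Cl. apply Rabs_def2 in HN2. apply Rabs_def1; lra. Qed.
End Incr.

Section Construction.
Context {Om : Type} (Alg : (Om -> bool) -> Prop) (HAlg : is_algebra Alg)
  (rho : (Om -> bool) -> R) (Hrho : is_ba Alg rho) (Hpos : forall A, Alg A -> 0 <= rho A).
Context {Dd : Type} (le : Dd -> Dd -> Prop) (Hdir : is_directed le) (LIM : (Dd -> R) -> R) (HLIM : is_banach_limit le LIM).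
Context (h : Dd -> Om -> R) (HhB : forall a, is_B Alg (h a)) (Kh : R) (HK0 : 0 <= Kh) (HhK : forall a w, Rabs (h a w) <= Kh).

Lemma rho_sequence : exists f : nat -> Om -> R,
  (forall n, is_simple Alg (f n)) /\ (exists M, forall n w, Rabs (f n w) <= M) /\
  L1_cauchy_for Alg rho f /\ tests_converge Alg rho LIM f h /\
  ((forall a b, le a b -> forall w, h a w <= h b w) -> forall n w, f n w <= f (S n) w).
Proof. destruct (classic (forall a b, le a b -> forall w, h a w <= h b w)) as [Hinc|Hninc].
  - exists (incr_seq Alg HAlg rho Hrho Hpos le Hdir h HhB Kh HhK).
    split; [|split; [|split; [|split]]].
    + intro n. apply incr_seq_simple.
    + exists (Kh + 4). intros n w. apply incr_seq_bound; auto.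
    + apply incr_seq_L1; auto.
    + apply incr_conv; auto.
    + intros _ n w. apply incr_seq_incr; auto.
  - destruct (general_seq Alg HAlg rho Hrho Hpos le LIM HLIM h HhB Kh HK0 HhK) as [f [Fs [Fb [Fc Ft]]]].
    exists f. split; [|split; [|split; [|split]]]; auto.
    + exists Kh; auto.
    + intros Hinc; contradiction. Qed.
End Construction.

Theorem mainTheorem9
  (Om : Type) (Alg : (Om -> bool) -> Prop) (HAlg : is_algebra Alg)
  (lam : (Om -> bool) -> R) (Hlam : is_ba Alg lam)
  (D : Type) (le : D -> D -> Prop) (Hdir : is_directed le)
  (LIM : (D -> R) -> R) (HLIM : is_banach_limit le LIM)
  (h : D -> Om -> R) (HhB : forall a, is_B Alg (h a))
  (Hhbd : exists M, forall a w, Rabs (h a w) <= M) :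
  exists f : nat -> Om -> R,
    (forall n, is_simple Alg (f n)) /\
    (exists M, forall n w, Rabs (f n w) <= M) /\
    (forall mu, is_ba Alg mu -> abs_cont Alg mu lam -> L1_cauchy Alg mu f) /\
    (forall mu, is_ba Alg mu -> abs_cont Alg mu lam ->
       forall A, Alg A ->
         Un_cv (fun n => integ Alg mu (fun w => f n w * indic A w))
               (LIM (fun a => integ Alg mu (fun w => h a w * indic A w)))) /\
    ((forall a b, le a b -> forall w, h a w <= h b w) ->
       forall n w, f n w <= f (S n) w).
Proof.
  set (rho := tv Alg lam).
  assert (Hrho : is_ba Alg rho) by (apply tv_ba; auto).
  assert (Hpos : forall A, Alg A -> 0 <= rho A) by (intros; apply tv_nonneg; auto).
  destruct Hhbd as [M HM].
  assert (HhK : forall a w, Rabs (h a w) <= Rabs M) by (intros; eapply Rle_trans; [apply HM|apply Rle_abs]).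
  destruct (rho_sequence Alg HAlg rho Hrho Hpos le Hdir LIM HLIM h HhB (Rabs M) (Rabs_pos M) HhK)
    as [f [Fs [[Kf Fb] [Fc [Ft Fi]]]]].
  assert (Transfer : forall mu, is_ba Alg mu -> abs_cont Alg mu lam -> L1_cauchy Alg mu f /\ forall A, Alg A ->
    Un_cv (fun n => integ Alg mu (fun w => f n w * indic A w)) (LIM (fun a => integ Alg mu (fun w => h a w * indic A w))))
    by (intros mu Hmu Hac; apply (transfer_sequence Alg HAlg rho Hrho Hpos mu Hmu Hac le LIM HLIM f h Kf (Rabs M)); auto).
  exists f. split; [|split; [|split; [|split]]]; auto.
  - exists Kf; auto.
  - intros mu Hmu Hac. apply Transfer; auto.
  - intros mu Hmu Hac. apply Transfer; auto.
Qed.
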